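(* Let $f:\mathbb{R}\to\mathbb{R}$ be sufficiently smooth with a simple root $\alpha$ ($f(\alpha)=0$, $f'(\alpha)\ne0$). For $s\ge 1$, consider the Adams–Bashforth root-finder $$x_{n+s}=x_{n+s-1}+h_{n+s}\sum_{k=0}^{s-1}b_k^{(n)}F(x_{n+k}),\qquad F(x)=\frac{1}{f'(x)},\quad h_{n+s}=-f(x_{n+s-1}),$$ whose coefficients $b_k^{(n)}$ are chosen to maximise the order of convergence (equivalently, $x_{n+s}=H(0)$ where $H$ is the polynomial of degree at most $s$ with $H(f(x_{n+s-1}))=x_{n+s-1}$ and $H'(f(x_{n+k}))=1/f'(x_{n+k})$ for $k=0,\dots,s-1$; for $s=1$ this is Newton's method). Then the convergence rate $p$ is the largest real root of $$p^{s+1}-3p^s+p^{s-1}+1=0,$$ it satisfies $p<\frac{3+\sqrt5}{2}$, and the rates form a monotonically increasing sequence in $s$ with $p\to\frac{3+\sqrt5}{2}$ as $s\to\infty$.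
   Context: Writing $\varepsilon_l=x_l-\alpha$, the convergence rate is the number $p$ such that $|\varepsilon_{l+1}|=C|\varepsilon_l|^p$ asymptotically as $l\to\infty$ for some constant $C>0$.
   Formalization: The rate p is claimed only when the (s+1)-th derivative at 0 of the local inverse of f (with value α at 0) is nonzero, for starting values close enough to α, with f infinitely differentiable. Apart from conventions, each condition added here is assumed in the paper as well or is needed for the statement above to hold. *)

From Stdlib Require Import Reals.
From Coquelicot Require Import Coquelicot.
Open Scope R_scope.

Definition smooth (f : R -> R) : Prop :=
  forall (n : nat) (x : R), ex_derive_n f n x.

Definition poly_eval (c : nat -> R) (s : nat) (t : R) : R :=
  sum_f_R0 (fun j => c j * t ^ j) s.

(* One step of the s-step Adams–Bashforth root-finder, in its
   interpolation form: x_(n+s) = H(0), where H has degree <= s,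
   H(f(x_(n+s-1))) = x_(n+s-1) and H'(f(x_(n+k))) = 1/f'(x_(n+k)),
   k = 0, ..., s-1. *)
Definition AB_next (f : R -> R) (s : nat) (x : nat -> R) (n : nat) : Prop :=
  exists c : nat -> R,
    poly_eval c s (f (x (n + s - 1)%nat)) = x (n + s - 1)%nat /\
    (forall k : nat, (k < s)%nat ->
        Derive (poly_eval c s) (f (x (n + k)%nat)) = / Derive f (x (n + k)%nat)) /\
    x (n + s)%nat = poly_eval c s 0.

Definition AB_sequence (f : R -> R) (s : nat) (x : nat -> R) : Prop :=
  forall n : nat, AB_next f s x n.

Definition has_convergence_rate (x : nat -> R) (alpha p : R) : Prop :=
  is_lim_seq x alpha /\
  exists C : R, 0 < C /\
    is_lim_seq (fun l => Rabs (x (S l) - alpha) / Rpower (Rabs (x l - alpha)) p) C.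

Definition rate_poly (s : nat) (p : R) : R :=
  p ^ (S s) - 3 * p ^ s + p ^ (s - 1) + 1.

(* Genericity: the (s+1)-th derivative at 0 of the local inverse
   f^{-1} (near 0, with f^{-1}(0) = alpha) is nonzero. *)
Definition inverse_nondegenerate (f : R -> R) (alpha : R) (s : nat) : Prop :=
  exists (g : R -> R) (r : R), 0 < r /\ g 0 = alpha /\
    (forall y, Rabs y < r -> f (g y) = y /\ continuous g y) /\
    Derive_n g (S s) 0 <> 0.

(* Let [g] be the inverse of [f] near [0] and [y_k = f (x_(n+k))].  The new
   iterate is [H(0)], where [H'] interpolates [g'] at the nodes [y_0, ..., y_(s-1)]
   and [H(y_(s-1)) = g(y_(s-1))], so the new error is minus the integral of
   [g' - H'] from [y_(s-1)] to [0].  By the interpolation remainder,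
   [g' - H' ~ A (t - y_0) ... (t - y_(s-1))] with [A = g^(s+1)(0) / s!], whence
   [e_(n+s) ~ -A (-y_0) ... (-y_(s-2)) y_(s-1)^2 / 2] and [y_k ~ f'(alpha) e_(n+k)].
   The logarithms [Y_l = ln |e_l|] therefore satisfy
   [Y_(n+s) - 2 Y_(n+s-1) - (Y_n + ... + Y_(n+s-2)) -> L],
   a recurrence whose characteristic polynomial, times [X - 1], is [rate_poly s].
   Factoring out [X - p] for its largest root [p] leaves a recurrence with
   positive weights for [Y_(l+1) - p Y_l], which converges: this is the rate [p].
   For [q > 1], [rate_poly s q = (q - 1) q ^ s (1 - 1/q - q^-1 - ... - q^-s)] and
   the last factor increases with [q], which gives the properties of [p]. *)

From Stdlib Require Import Reals Lra Lia Classical.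
From Coquelicot Require Import Coquelicot.
Open Scope R_scope.
Set Bullet Behavior "Strict Subproofs".

(** * Functions of class C^n on an open set *)

Fixpoint Cn_on (n : nat) (f : R -> R) (D : R -> Prop) : Prop :=
  match n with
  | O => forall x, D x -> continuous f x
  | S m => (forall x, D x -> ex_derive f x) /\ Cn_on m (Derive f) D
  end.

Lemma ex_derive_continuous_R (f : R -> R) x : ex_derive f x -> continuous f x.
Proof. exact (@ex_derive_continuous R_AbsRing R_NormedModule f x). Qed.

Lemma ball_Rabs (x y e : R) : ball x e y <-> Rabs (y - x) < e.
Proof. cbn. unfold AbsRing_ball, abs, minus, plus, opp. simpl. tauto. Qed.

Lemma locally_Rabs x (P : R -> Prop) :
  locally x P -> exists d, 0 < d /\ forall y, Rabs (y - x) < d -> P y.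
Proof.
  intros [e He]. exists e. split; [apply cond_pos|].
  intros y Hy. apply He, ball_Rabs, Hy.
Qed.

Lemma Rabs_locally x (P : R -> Prop) d :
  0 < d -> (forall y, Rabs (y - x) < d -> P y) -> locally x P.
Proof. intros Hd H. exists (mkposreal d Hd). intros y Hy. apply H, ball_Rabs, Hy. Qed.

Lemma continuous_Rabs_lt (g : R -> R) x : continuous g x ->
  forall e, 0 < e -> exists d, 0 < d /\ forall y, Rabs (y - x) < d -> Rabs (g y - g x) < e.
Proof.
  intros Hc e He.
  apply (proj1 (filterlim_locally g (g x))) with (eps := mkposreal e He) in Hc.
  destruct (locally_Rabs _ _ Hc) as [d [Hd H]]. exists d. split; auto.
Qed.

Lemma open_Rabs_lt c r : open (fun x => Rabs (x - c) < r).
Proof.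
  intros x Hx. apply Rabs_locally with (r - Rabs (x - c)); [lra|].
  intros y Hy. replace (y - c) with ((y - x) + (x - c)) by ring.
  eapply Rle_lt_trans; [apply Rabs_triang|lra].
Qed.

Lemma open_Rabs_lt_0 r : open (fun y => Rabs y < r).
Proof.
  apply open_ext with (fun y => Rabs (y - 0) < r); [|apply open_Rabs_lt].
  intros y. rewrite Rminus_0_r. tauto.
Qed.

Lemma open_eq_locally (D : R -> Prop) (f g : R -> R) x :
  open D -> (forall y, D y -> f y = g y) -> D x -> locally x (fun y => f y = g y).
Proof.
  intros HD Hfg Hx. destruct (HD x Hx) as [e He]. exists e. intros y Hy. apply Hfg, He, Hy.
Qed.

Section Cn_on_theory.
Variable D : R -> Prop.
Hypothesis HD : open D.

Lemma Cn_on_ext n : forall f g, (forall x, D x -> f x = g x) -> Cn_on n f D -> Cn_on n g D.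
Proof.
  induction n as [|n IH]; intros f g Hfg H; simpl in *.
  - intros x Hx. apply continuous_ext_loc with f; [|now apply H].
    apply (open_eq_locally D f g x HD Hfg Hx).
  - destruct H as [H1 H2]. split.
    + intros x Hx. apply ex_derive_ext_loc with f; [apply (open_eq_locally D f g x HD Hfg Hx)|now apply H1].
    + apply IH with (Derive f); auto.
      intros x Hx. apply Derive_ext_loc, (open_eq_locally D f g x HD Hfg Hx).
Qed.

Lemma Cn_on_plus n : forall f g, Cn_on n f D -> Cn_on n g D -> Cn_on n (fun x => f x + g x) D.
Proof.
  induction n as [|n IH]; intros f g Hf Hg; simpl in *.
  - intros x Hx. apply (continuous_plus f g); auto.
  - destruct Hf as [Hf1 Hf2], Hg as [Hg1 Hg2]. split.
    + intros x Hx. apply (ex_derive_plus f g); auto.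
    + apply Cn_on_ext with (fun x => Derive f x + Derive g x); auto.
      intros x Hx. rewrite Derive_plus; auto.
Qed.

Lemma Cn_on_scal n : forall c f, Cn_on n f D -> Cn_on n (fun x => c * f x) D.
Proof.
  induction n as [|n IH]; intros c f Hf; simpl in *.
  - intros x Hx. apply (continuous_mult (fun _ => c) f); auto. apply continuous_const.
  - destruct Hf as [Hf1 Hf2]. split.
    + intros x Hx. apply ex_derive_scal; auto.
    + apply Cn_on_ext with (fun x => c * Derive f x); auto.
      intros x Hx. rewrite Derive_scal; auto.
Qed.

Lemma Cn_on_minus n f g : Cn_on n f D -> Cn_on n g D -> Cn_on n (fun x => f x - g x) D.
Proof.
  intros Hf Hg. apply Cn_on_plus; auto.
  apply Cn_on_ext with (fun x => (-1) * g x); [intros; ring|]. apply Cn_on_scal, Hg.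
Qed.

Lemma Cn_on_S n f : Cn_on (S n) f D -> Cn_on n f D.
Proof.
  revert f. induction n as [|n IH]; intros f [H1 H2].
  - intros x Hx. apply ex_derive_continuous_R, H1, Hx.
  - split; auto.
Qed.

Lemma Cn_on_continuous n f : Cn_on n f D -> forall x, D x -> continuous f x.
Proof.
  induction n as [|n IH]; [auto|]. intros H. apply IH, Cn_on_S, H.
Qed.

Lemma Cn_on_mult n : forall f g, Cn_on n f D -> Cn_on n g D -> Cn_on n (fun x => f x * g x) D.
Proof.
  induction n as [|n IH]; intros f g Hf Hg.
  - intros x Hx. apply (continuous_mult f g); [apply Hf|apply Hg]; auto.
  - pose proof (Cn_on_S _ _ Hf) as Hf'. pose proof (Cn_on_S _ _ Hg) as Hg'.
    destruct Hf as [Hf1 Hf2], Hg as [Hg1 Hg2]. split.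
    + intros x Hx. apply ex_derive_mult; auto.
    + apply Cn_on_ext with (fun x => Derive f x * g x + f x * Derive g x).
      * intros x Hx. rewrite Derive_mult; auto.
      * apply Cn_on_plus; auto.
Qed.

Lemma Cn_on_Derive_n k : forall m f, Cn_on (k + m) f D -> Cn_on m (Derive_n f k) D.
Proof.
  induction k as [|k IH]; intros m f H; simpl in *; auto.
  destruct H as [_ H]. apply IH in H.
  apply Cn_on_ext with (Derive_n (Derive f) k); auto.
  intros x _. rewrite (Derive_n_comp f k 1), Nat.add_1_r. reflexivity.
Qed.

Lemma Derive_n_minus_on n : forall f g, Cn_on n f D -> Cn_on n g D ->
  forall x, D x -> Derive_n (fun y => f y - g y) n x = Derive_n f n x - Derive_n g n x.
Proof.
  induction n as [|n IH]; intros f g Hf Hg x Hx; [reflexivity|].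
  destruct Hf as [Hf1 Hf2], Hg as [Hg1 Hg2].
  assert (E : forall h, Derive_n h (S n) x = Derive_n (Derive h) n x).
  { intros h. rewrite (Derive_n_comp h n 1), Nat.add_1_r. reflexivity. }
  rewrite !E, <- (IH (Derive f) (Derive g)); auto.
  apply Derive_n_ext_loc, (open_eq_locally D); auto.
  intros y Hy. apply Derive_minus; auto.
Qed.

End Cn_on_theory.

Lemma Cn_on_comp n : forall f g D E, open D -> open E -> Cn_on n f E -> Cn_on n g D ->
  (forall x, D x -> E (g x)) -> Cn_on n (fun x => f (g x)) D.
Proof.
  induction n as [|n IH]; intros f g D E HD HE Hf Hg HgE.
  - intros x Hx. apply continuous_comp; [apply Hg|apply Hf]; auto.
  - pose proof (Cn_on_S _ _ _ Hf) as Hf'. pose proof (Cn_on_S _ _ _ Hg) as Hg'.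
    destruct Hf as [Hf1 Hf2], Hg as [Hg1 Hg2]. split.
    + intros x Hx. apply ex_derive_comp; auto.
    + apply Cn_on_ext with (fun x => Derive f (g x) * Derive g x); auto.
      * intros x Hx. rewrite (Derive_comp f g x); [ring|apply Hf1, HgE, Hx|apply Hg1, Hx].
      * apply Cn_on_mult; auto. apply IH with E; auto.
Qed.

Lemma Cn_on_Rinv n : Cn_on n Rinv (fun x => x <> 0).
Proof.
  assert (HD := open_neq 0).
  assert (Hd : forall x, x <> 0 -> ex_derive Rinv x).
  { intros x Hx. apply (ex_derive_Reals_1 Rinv), (derivable_pt_inv id); auto. apply derivable_pt_id. }
  induction n as [|n IH]; simpl.
  - intros x Hx. apply ex_derive_continuous_R, Hd, Hx.
  - split; [exact Hd|].
    apply Cn_on_ext with (fun x => (-1) * (/ x * / x)); auto.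
    + intros x Hx. symmetry. apply is_derive_unique. auto_derive; auto. field; auto.
    + apply Cn_on_scal, Cn_on_mult; auto.
Qed.

Lemma smooth_Cn_on f : smooth f -> forall n k D, Cn_on n (Derive_n f k) D.
Proof.
  intros Hf n. induction n as [|n IH]; intros k D; simpl.
  - intros x _. apply ex_derive_continuous_R, (Hf (S k) x).
  - split; [intros x _; apply (Hf (S k) x)|apply (IH (S k))].
Qed.

(** * Finite sums and products *)

Fixpoint rsum (m : nat) (u : nat -> R) : R :=
  match m with O => 0 | S m' => rsum m' u + u m' end.

Fixpoint rprod (m : nat) (u : nat -> R) : R :=
  match m with O => 1 | S m' => rprod m' u * u m' end.

Lemma rsum_ext m u v : (forall i, (i < m)%nat -> u i = v i) -> rsum m u = rsum m v.
Proof. induction m; simpl; intros H; auto. rewrite IHm, H; auto. Qed.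

Lemma rsum_plus m u v : rsum m (fun i => u i + v i) = rsum m u + rsum m v.
Proof. induction m; simpl; [ring|rewrite IHm; ring]. Qed.

Lemma rsum_scal m c u : rsum m (fun i => c * u i) = c * rsum m u.
Proof. induction m; simpl; [ring|rewrite IHm; ring]. Qed.

Lemma rsum_minus m u v : rsum m (fun i => u i - v i) = rsum m u - rsum m v.
Proof. induction m; simpl; [ring|rewrite IHm; ring]. Qed.

Lemma rsum_mult_r m u c : rsum m (fun i => u i * c) = rsum m u * c.
Proof. induction m; simpl; [ring|rewrite IHm; ring]. Qed.

Lemma rsum_le m u v : (forall i, (i < m)%nat -> u i <= v i) -> rsum m u <= rsum m v.
Proof. induction m; simpl; intros H; [lra|]. apply Rplus_le_compat; auto. Qed.

Lemma rsum_nonneg m u : (forall i, (i < m)%nat -> 0 <= u i) -> 0 <= rsum m u.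
Proof.
  intros H. replace 0 with (rsum m (fun _ => 0)); [apply rsum_le; auto|].
  induction m; simpl; auto. rewrite IHm; auto; ring.
Qed.

Lemma rsum_ge_term m u j : (forall i, (i < m)%nat -> 0 <= u i) -> (j < m)%nat -> u j <= rsum m u.
Proof.
  induction m; simpl; intros H Hj; [lia|].
  destruct (Nat.eq_dec j m) as [->|Hne].
  - assert (0 <= rsum m u) by (apply rsum_nonneg; auto). lra.
  - assert (0 <= u m) by auto. assert (u j <= rsum m u) by (apply IHm; auto; lia). lra.
Qed.

Lemma is_lim_seq_rsum m (u : nat -> nat -> R) (l : nat -> R) :
  (forall k, (k < m)%nat -> is_lim_seq (u k) (l k)) ->
  is_lim_seq (fun n => rsum m (fun k => u k n)) (rsum m l).
Proof.
  induction m as [|m IH]; intros H; simpl; [apply is_lim_seq_const|].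
  apply (is_lim_seq_plus' (fun n => rsum m (fun k => u k n)) (u m)); auto.
Qed.

Definition node_poly (m : nat) (y : nat -> R) (t : R) := rprod m (fun k => t - y k).

Lemma rprod_eq0 m u j : (j < m)%nat -> u j = 0 -> rprod m u = 0.
Proof.
  induction m; simpl; intros Hj Hu; [lia|].
  destruct (Nat.eq_dec j m) as [->|Hne]; [rewrite Hu; ring|].
  rewrite IHm; [ring|lia|auto].
Qed.

Lemma rprod_neq0 m u : (forall k, (k < m)%nat -> u k <> 0) -> rprod m u <> 0.
Proof.
  induction m; simpl; intros H; [lra|].
  apply Rmult_integral_contrapositive_currified; auto.
Qed.

Lemma Rabs_rprod_le m u B : 0 <= B -> (forall k, (k < m)%nat -> Rabs (u k) <= B) ->
  Rabs (rprod m u) <= B ^ m.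
Proof.
  intros HB. induction m as [|m IH]; intros H; simpl.
  - rewrite Rabs_R1. lra.
  - rewrite Rabs_mult, Rmult_comm. apply Rmult_le_compat; try apply Rabs_pos; auto.
Qed.

Lemma rprod_perturb m (u v : nat -> R) tau : 0 <= tau ->
  (forall k, (k < m)%nat -> Rabs (u k - v k) <= tau * Rabs (v k)) ->
  Rabs (rprod m u - rprod m v) <= ((1 + tau) ^ m - 1) * Rabs (rprod m v).
Proof.
  intros Ht. induction m as [|m IH]; intros H; simpl.
  - rewrite Rminus_diag, Rabs_R0. lra.
  - assert (IH' := IH (fun k Hk => H k ltac:(lia))). assert (Hm := H m ltac:(lia)).
    replace (rprod m u * u m - rprod m v * v m)
      with ((rprod m u - rprod m v) * u m + rprod m v * (u m - v m)) by ring.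
    eapply Rle_trans; [apply Rabs_triang|]. rewrite !Rabs_mult.
    assert (Hum : Rabs (u m) <= (1 + tau) * Rabs (v m)).
    { replace (u m) with ((u m - v m) + v m) by ring. eapply Rle_trans; [apply Rabs_triang|lra]. }
    assert (0 <= Rabs (v m)) by apply Rabs_pos.
    assert (0 <= Rabs (rprod m v)) by apply Rabs_pos.
    assert (1 <= (1 + tau) ^ m) by (apply pow_R1_Rle; lra).
    apply Rle_trans with (((1 + tau) ^ m - 1) * Rabs (rprod m v) * ((1 + tau) * Rabs (v m))
                          + Rabs (rprod m v) * (tau * Rabs (v m))); [|right; ring].
    apply Rplus_le_compat.
    + apply Rmult_le_compat; auto using Rabs_pos.
    + apply Rmult_le_compat_l; auto.
Qed.

Lemma ln_Rabs_rprod m u : (forall k, (k < m)%nat -> u k <> 0) ->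
  ln (Rabs (rprod m u)) = rsum m (fun k => ln (Rabs (u k))).
Proof.
  induction m as [|m IH]; intros H; simpl.
  - rewrite Rabs_R1, ln_1. reflexivity.
  - rewrite Rabs_mult, ln_mult, IH; auto; apply Rabs_pos_lt; auto.
    apply rprod_neq0. auto.
Qed.

(** * Polynomials characterised by their derivatives *)

(* [is_poly d a f]: [f] is a polynomial of degree at most [d] whose coefficient
   of [t ^ d] is [a]; equivalently its [d]-th derivative is the constant [d! a]. *)
Fixpoint is_poly (d : nat) (a : R) (f : R -> R) : Prop :=
  match d with
  | O => forall t, f t = a
  | S d' => (forall t, ex_derive f t) /\ is_poly d' (INR (S d') * a) (Derive f)
  end.

Lemma is_poly_ext d : forall a f g, (forall t, f t = g t) -> is_poly d a f -> is_poly d a g.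
Proof.
  induction d as [|d IH]; intros a f g Hfg H.
  - simpl in *. intros t. rewrite <- Hfg. auto.
  - destruct H as [H1 H2]. split.
    + intros t. apply ex_derive_ext with f; auto.
    + apply IH with (Derive f); auto. intros t. apply Derive_ext; auto.
Qed.

Lemma is_poly_plus d : forall a b f g, is_poly d a f -> is_poly d b g ->
  is_poly d (a + b) (fun t => f t + g t).
Proof.
  induction d as [|d IH]; intros a b f g Hf Hg.
  - simpl in *. intros t. rewrite Hf, Hg. auto.
  - destruct Hf as [Hf1 Hf2], Hg as [Hg1 Hg2]. split.
    + intros t. apply (ex_derive_plus f g); auto.
    + apply is_poly_ext with (fun t => Derive f t + Derive g t).
      * intros t. rewrite Derive_plus; auto.
      * rewrite Rmult_plus_distr_l. apply IH; auto.
Qed.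

Lemma is_poly_scal d : forall c a f, is_poly d a f -> is_poly d (c * a) (fun t => c * f t).
Proof.
  induction d as [|d IH]; intros c a f Hf.
  - simpl in *. intros t. rewrite Hf. auto.
  - destruct Hf as [Hf1 Hf2]. split.
    + intros t. apply ex_derive_scal; auto.
    + apply is_poly_ext with (fun t => c * Derive f t).
      * intros t. rewrite Derive_scal; auto.
      * replace (INR (S d) * (c * a)) with (c * (INR (S d) * a)) by ring. apply IH; auto.
Qed.

Lemma is_poly_S d : forall a f, is_poly d a f -> is_poly (S d) 0 f.
Proof.
  induction d as [|d IH]; intros a f Hf.
  - simpl in *. split.
    + intros t. apply ex_derive_ext with (fun _ => a); auto. apply ex_derive_const.
    + intros t. rewrite Rmult_0_r, (Derive_ext f (fun _ => a)); auto. apply Derive_const.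
  - destruct Hf as [Hf1 Hf2]. split; auto.
    rewrite Rmult_0_r. exact (IH _ _ Hf2).
Qed.

Lemma is_poly_ex_derive d a f : is_poly d a f -> forall t, ex_derive f t.
Proof. intros H. apply is_poly_S in H. apply H. Qed.

Lemma is_poly_mul_lin m : forall a u y, is_poly m a u -> is_poly (S m) a (fun t => u t * (t - y)).
Proof.
  assert (Hlin : forall y t, Derive (fun t => t - y) t = 1).
  { intros y t. rewrite Derive_minus, Derive_id, Derive_const; auto using ex_derive_id, ex_derive_const. ring. }
  induction m as [|m IH]; intros a u y Hu.
  - assert (Hd : forall t, ex_derive u t) by (apply is_poly_ex_derive with 0%nat a; auto).
    split.
    + intros t. apply ex_derive_mult; auto. auto_derive; auto.
    + intros t. simpl in Hu. rewrite Derive_mult, Hlin, (Derive_ext u (fun _ => a)), Derive_const, Hu;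
        auto; [simpl; ring|auto_derive; auto].
  - pose proof Hu as Hu0. destruct Hu as [Hu1 Hu2]. split.
    + intros t. apply ex_derive_mult; auto. auto_derive; auto.
    + apply is_poly_ext with (fun t => Derive u t * (t - y) + u t).
      * intros t. rewrite Derive_mult, Hlin; auto; [ring|auto_derive; auto].
      * replace (INR (S (S m)) * a) with (INR (S m) * a + a) by (rewrite (S_INR (S m)); ring).
        apply is_poly_plus; auto.
Qed.

Lemma Derive_n_is_poly d : forall a f t, is_poly d a f -> Derive_n f d t = INR (Factorial.fact d) * a.
Proof.
  induction d as [|d IH]; intros a f t Hf.
  - simpl in *. rewrite Hf. ring.
  - destruct Hf as [Hf1 Hf2].
    replace (Derive_n f (S d) t) with (Derive_n (Derive f) d t)
      by (rewrite (Derive_n_comp f d 1), Nat.add_1_r; reflexivity).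
    rewrite (IH _ _ t Hf2), fact_simpl, mult_INR. ring.
Qed.

Lemma is_poly_Cn_on n : forall d a f D, is_poly d a f -> Cn_on n f D.
Proof.
  induction n as [|n IH]; intros d a f D Hf; apply is_poly_S in Hf; destruct Hf as [Hf1 Hf2].
  - intros x _. apply ex_derive_continuous_R; auto.
  - split; [intros; auto|]. apply IH with d (INR (S d) * 0); auto.
Qed.

Lemma is_poly_pow k : is_poly k 1 (fun t => t ^ k).
Proof.
  induction k as [|k IH]; [simpl; auto|].
  apply is_poly_ext with (fun t => t ^ k * (t - 0)); [intros t; simpl; ring|].
  apply is_poly_mul_lin; auto.
Qed.

Lemma is_poly_poly_eval s : forall c, is_poly s (c s) (poly_eval c s).
Proof.
  induction s as [|s IH]; intros c.
  - intros t. unfold poly_eval. simpl. ring.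
  - apply is_poly_ext with (fun t => poly_eval c s t + c (S s) * t ^ (S s));
      [intros t; unfold poly_eval; simpl; ring|].
    replace (c (S s)) with (0 + c (S s) * 1) at 1 by ring.
    apply is_poly_plus; [apply is_poly_S with (c s), IH|apply is_poly_scal, is_poly_pow].
Qed.

Lemma is_poly_node m y : is_poly m 1 (node_poly m y).
Proof.
  induction m as [|m IH]; simpl; auto.
  exact (is_poly_mul_lin m 1 _ (y m) IH).
Qed.

(** * The interpolation remainder *)

Lemma mvt_Derive (F : R -> R) a b : a < b -> (forall x, a <= x <= b -> ex_derive F x) ->
  exists c, a < c < b /\ F b - F a = Derive F c * (b - a).
Proof.
  intros Hab HF. destruct (MVT_cor2 F (Derive F) a b Hab) as [c [Hc1 Hc2]].
  - intros c Hc. apply is_derive_Reals, Derive_correct, HF, Hc.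
  - exists c. auto.
Qed.

Lemma rolle_Derive (F : R -> R) a b : a < b -> (forall x, a <= x <= b -> ex_derive F x) ->
  F a = F b -> exists c, a < c < b /\ Derive F c = 0.
Proof.
  intros Hab HF Heq. destruct (mvt_Derive F a b Hab HF) as [c [Hc HFc]].
  exists c. split; auto. rewrite Heq, Rminus_diag in HFc.
  symmetry in HFc. apply Rmult_integral in HFc. destruct HFc; [auto|lra].
Qed.

Lemma finite_choice (P : nat -> R -> Prop) m :
  (forall i, (i <= m)%nat -> exists x, P i x) ->
  exists w : nat -> R, forall i, (i <= m)%nat -> P i (w i).
Proof.
  induction m as [|m IH]; intros H.
  - destruct (H 0%nat (le_n _)) as [x Hx]. exists (fun _ => x).
    intros i Hi. replace i with 0%nat by lia. auto.
  - destruct IH as [w Hw]; [intros i Hi; apply H; lia|].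
    destruct (H (S m) (le_n _)) as [x Hx].
    exists (fun i => if Nat.eq_dec i (S m) then x else w i).
    intros i Hi. destruct (Nat.eq_dec i (S m)) as [->|]; auto. apply Hw; lia.
Qed.

Lemma Derive_n_root_between (D : R -> Prop) lo hi m : forall F (z : nat -> R), open D ->
  (forall x, lo <= x <= hi -> D x) -> Cn_on m F D ->
  (forall i, (i <= m)%nat -> lo <= z i <= hi) ->
  (forall i, (i < m)%nat -> z i < z (S i)) ->
  (forall i, (i <= m)%nat -> F (z i) = 0) ->
  exists xi, lo <= xi <= hi /\ Derive_n F m xi = 0.
Proof.
  induction m as [|m IH]; intros F z HD Hsub HF Hz Hinc Hzero.
  { exists (z 0%nat). split; [apply Hz|apply Hzero]; lia. }
  destruct HF as [HF1 HF2].
  destruct (finite_choice (fun i c => z i < c < z (S i) /\ Derive F c = 0) m) as [w Hw].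
  { intros i Hi. pose proof (Hz i ltac:(lia)). pose proof (Hz (S i) ltac:(lia)).
    apply rolle_Derive; [apply Hinc; lia| |rewrite !Hzero; auto; lia].
    intros x Hx. apply HF1, Hsub. lra. }
  destruct (IH (Derive F) w HD Hsub HF2) as [xi [Hxi1 Hxi2]].
  - intros i Hi. destruct (Hw i Hi) as [[H1 H2] _].
    pose proof (Hz i ltac:(lia)). pose proof (Hz (S i) ltac:(lia)). lra.
  - intros i Hi. destruct (Hw i ltac:(lia)) as [[H1 H2] _]. destruct (Hw (S i) ltac:(lia)) as [[H3 H4] _]. lra.
  - intros i Hi. apply Hw; auto.
  - exists xi. split; auto. rewrite <- Hxi2, (Derive_n_comp F m 1), Nat.add_1_r. reflexivity.
Qed.

Lemma exists_argmax m (z : nat -> R) :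
  exists j, (j <= m)%nat /\ forall i, (i <= m)%nat -> z i <= z j.
Proof.
  induction m as [|m IH].
  - exists 0%nat. split; auto. intros i Hi. replace i with 0%nat by lia. lra.
  - destruct IH as [j [Hj1 Hj2]]. destruct (Rle_dec (z (S m)) (z j)).
    + exists j. split; [lia|]. intros i Hi.
      destruct (Nat.eq_dec i (S m)) as [->|]; auto. apply Hj2; lia.
    + exists (S m). split; [lia|]. intros i Hi.
      destruct (Nat.eq_dec i (S m)) as [->|]; [lra|]. pose proof (Hj2 i ltac:(lia)). lra.
Qed.

Lemma sort_distinct m : forall z : nat -> R,
  (forall i j, (i <= m)%nat -> (j <= m)%nat -> i <> j -> z i <> z j) ->
  exists w : nat -> R, (forall i, (i < m)%nat -> w i < w (S i)) /\
    (forall i, (i <= m)%nat -> exists j, (j <= m)%nat /\ w i = z j).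
Proof.
  induction m as [|m IH]; intros z Hinj.
  { exists z. split; [intros; lia|]. intros i Hi. exists i. auto. }
  destruct (exists_argmax (S m) z) as [jm [Hjm1 Hjm2]].
  (* Move the maximum to the last slot and sort the rest. *)
  set (z' := fun i => if Nat.eq_dec i jm then z (S m) else z i).
  destruct (IH z') as [w' [Hw1 Hw2]].
  { intros i j Hi Hj Hij. unfold z'.
    destruct (Nat.eq_dec i jm), (Nat.eq_dec j jm); try (subst; lia); apply Hinj; lia. }
  exists (fun i => if Nat.eq_dec i (S m) then z jm else w' i). split.
  - intros i Hi. destruct (Nat.eq_dec i (S m)); [lia|].
    destruct (Nat.eq_dec (S i) (S m)); [|apply Hw1; lia].
    assert (i = m) by lia. subst i.
    destruct (Hw2 m (le_n _)) as [j [Hj ->]]. unfold z'.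
    destruct (Nat.eq_dec j jm).
    + pose proof (Hjm2 (S m) (le_n _)). assert (z (S m) <> z jm) by (apply Hinj; lia). lra.
    + pose proof (Hjm2 j ltac:(lia)). assert (z j <> z jm) by (apply Hinj; lia). lra.
  - intros i Hi. destruct (Nat.eq_dec i (S m)); [exists jm; auto|].
    destruct (Hw2 i ltac:(lia)) as [j [Hj ->]]. unfold z'.
    destruct (Nat.eq_dec j jm); [exists (S m)|exists j]; auto.
Qed.

Section Interpolation.
Variables (d : nat) (phi Q : R -> R) (b : R) (y : nat -> R) (D : R -> Prop) (lo hi : R).
Hypothesis HD : open D.
Hypothesis Hsub : forall x, lo <= x <= hi -> D x.
Hypothesis Hphi : Cn_on (S d) phi D.
Hypothesis HQ : is_poly d b Q.
Hypothesis Hy : forall k, (k < S d)%nat -> lo <= y k <= hi.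
Hypothesis Hinj : forall i j, (i < S d)%nat -> (j < S d)%nat -> i <> j -> y i <> y j.
Hypothesis Hint : forall k, (k < S d)%nat -> Q (y k) = phi (y k).

(* Rolle applied to [phi - Q - K node_poly], which vanishes at the nodes and at [t]. *)
Lemma Derive_n_remainder_root t K : lo <= t <= hi -> (forall j, (j < S d)%nat -> t <> y j) ->
  phi t - Q t = K * node_poly (S d) y t ->
  exists xi, lo <= xi <= hi /\ Derive_n phi (S d) xi - INR (Factorial.fact (S d)) * K = 0.
Proof.
  intros Ht Hnot HK.
  set (F := fun x => phi x - Q x - K * node_poly (S d) y x).
  set (z := fun i => if Nat.eq_dec i (S d) then t else y i).
  assert (HQC : forall n, Cn_on n Q D) by (intros; apply is_poly_Cn_on with d b, HQ).
  assert (HnC : forall n, Cn_on n (node_poly (S d) y) D) by (intros; apply is_poly_Cn_on with (S d) 1, is_poly_node).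
  destruct (sort_distinct (S d) z) as [w [Hw1 Hw2]].
  { intros i j Hi Hj Hij. unfold z.
    destruct (Nat.eq_dec i (S d)), (Nat.eq_dec j (S d)); try lia.
    - apply Hnot. lia.
    - apply not_eq_sym, Hnot. lia.
    - apply Hinj; lia. }
  destruct (Derive_n_root_between D lo hi (S d) F w HD Hsub) as [xi [Hxi1 Hxi2]].
  - apply Cn_on_minus, Cn_on_scal; auto. apply Cn_on_minus; auto.
  - intros i Hi. destruct (Hw2 i Hi) as [j [Hj ->]]. unfold z.
    destruct (Nat.eq_dec j (S d)); auto. apply Hy; lia.
  - exact Hw1.
  - intros i Hi. destruct (Hw2 i Hi) as [j [Hj ->]]. unfold z, F.
    destruct (Nat.eq_dec j (S d)); [lra|].
    rewrite Hint by lia. unfold node_poly. rewrite (rprod_eq0 (S d) _ j); [ring|lia|ring].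
  - exists xi. split; auto. rewrite <- Hxi2. unfold F.
    rewrite (Derive_n_minus_on D HD (S d) (fun x => phi x - Q x) (fun x => K * node_poly (S d) y x)),
      (Derive_n_minus_on D HD (S d) phi Q), Derive_n_scal_l,
      (Derive_n_is_poly (S d) 0 Q xi (is_poly_S _ _ _ HQ)),
      (Derive_n_is_poly (S d) 1 (node_poly (S d) y) xi (is_poly_node (S d) y)); auto.
    + ring.
    + apply Cn_on_minus; auto.
    + apply Cn_on_scal; auto.
Qed.

Lemma interpolation_remainder t : lo <= t <= hi ->
  exists xi, lo <= xi <= hi /\
    phi t - Q t = Derive_n phi (S d) xi / INR (Factorial.fact (S d)) * node_poly (S d) y t.
Proof.
  intros Ht.
  destruct (classic (exists j, (j < S d)%nat /\ t = y j)) as [[j [Hj ->]]|Hnot].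
  { exists lo. split; [lra|]. unfold node_poly. rewrite (rprod_eq0 (S d) _ j), Hint; auto; ring. }
  assert (Hnode : node_poly (S d) y t <> 0).
  { apply rprod_neq0. intros k Hk Hc. apply Hnot. exists k. split; auto. lra. }
  assert (Hfact : INR (Factorial.fact (S d)) <> 0) by apply INR_fact_neq_0.
  destruct (Derive_n_remainder_root t ((phi t - Q t) / node_poly (S d) y t)) as [xi [Hxi HK]]; auto.
  - intros j Hj Htj. apply Hnot. eauto.
  - field. auto.
  - exists xi. split; auto.
    replace (Derive_n phi (S d) xi) with (INR (Factorial.fact (S d)) * ((phi t - Q t) / node_poly (S d) y t))
      by lra.
    field. auto.
Qed.

End Interpolation.

(** * Integrals over [[a, 0]] *)

Definition between (a b t : R) := Rmin a b <= t <= Rmax a b.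

Lemma between_0_Rabs a t : between a 0 t -> Rabs t <= Rabs a.
Proof.
  unfold between. intros H. destruct (Rle_dec a 0).
  - rewrite Rmin_left, Rmax_right in H by lra. rewrite !Rabs_left1; lra.
  - rewrite Rmin_right, Rmax_left in H by lra. rewrite !Rabs_right; lra.
Qed.

Lemma ex_RInt_continuous_R (f : R -> R) a b :
  (forall t, between a b t -> continuous f t) -> ex_RInt f a b.
Proof. apply (ex_RInt_continuous (V := R_CompleteNormedModule)). Qed.

Lemma continuous_affine k a t : continuous (fun t => k * (t - a)) t.
Proof.
  apply (continuous_mult (fun _ => k) (fun t => t - a)); [apply continuous_const|].
  apply (continuous_plus (fun t => t) (fun _ => - a)); [apply continuous_id|apply continuous_const].
Qed.

Lemma RInt_affine k a : RInt (fun t => k * (t - a)) a 0 = k * (a * a) / 2.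
Proof.
  set (F := fun t => k * ((t - a) * (t - a)) / 2).
  replace (k * (a * a) / 2) with (minus (F 0) (F a))
    by (unfold minus, plus, opp, F; simpl; field).
  apply is_RInt_unique, (is_RInt_derive (V := R_CompleteNormedModule)).
  - intros x _. unfold F. auto_derive; auto. field.
  - intros x _. apply continuous_affine.
Qed.

Lemma Rabs_RInt_le_Rabs (f g : R -> R) a b :
  (forall t, between a b t -> continuous f t) -> (forall t, between a b t -> continuous g t) ->
  (forall t, between a b t -> Rabs (f t) <= g t) -> Rabs (RInt f a b) <= Rabs (RInt g a b).
Proof.
  assert (key : forall a b, a <= b -> (forall t, between a b t -> continuous f t) ->
    (forall t, between a b t -> continuous g t) ->
    (forall t, between a b t -> Rabs (f t) <= g t) -> Rabs (RInt f a b) <= Rabs (RInt g a b)).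
  { intros a' b' Hab Hf Hg Hfg.
    eapply Rle_trans; [apply abs_RInt_le; auto; apply ex_RInt_continuous_R; auto|].
    eapply Rle_trans; [|apply Rle_abs]. apply RInt_le; auto.
    - apply ex_RInt_continuous_R. intros t Ht. apply (continuous_comp f Rabs); auto. apply continuous_Rabs.
    - apply ex_RInt_continuous_R; auto.
    - intros x Hx. apply Hfg. unfold between. rewrite Rmin_left, Rmax_right; lra. }
  intros Hf Hg Hfg. destruct (Rle_dec a b) as [Hab|Hab]; [apply key; auto|].
  assert (Hs : forall t, between b a t -> between a b t).
  { intros t. unfold between. rewrite Rmin_comm, Rmax_comm. auto. }
  rewrite <- (opp_RInt_swap (V := R_CompleteNormedModule) f b a),
    <- (opp_RInt_swap (V := R_CompleteNormedModule) g b a); try (apply ex_RInt_continuous_R; auto).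
  unfold opp; simpl. rewrite !Rabs_Ropp. apply key; auto. lra.
Qed.

Lemma RInt_near_affine (h : R -> R) a c M : 0 <= M ->
  (forall t, between a 0 t -> continuous h t) ->
  (forall t, between a 0 t -> Rabs (h t - c * (t - a)) <= M * Rabs (t - a)) ->
  Rabs (RInt h a 0 - c * (a * a) / 2) <= M * (a * a) / 2.
Proof.
  intros HM Hc Hb.
  set (sg := if Rle_dec a 0 then 1 else -1).
  assert (Hsg : forall t, between a 0 t -> Rabs (t - a) = sg * (t - a)).
  { intros t Ht. unfold between, sg in *. destruct (Rle_dec a 0).
    - rewrite Rmin_left, Rmax_right in Ht by lra. rewrite Rabs_right; lra.
    - rewrite Rmin_right, Rmax_left in Ht by lra. rewrite Rabs_left1; lra. }
  rewrite <- RInt_affine.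
  replace (RInt h a 0 - RInt (fun t => c * (t - a)) a 0) with (RInt (fun t => h t - c * (t - a)) a 0)
    by (rewrite (RInt_minus (V := R_CompleteNormedModule)); auto;
        apply ex_RInt_continuous_R; auto using continuous_affine).
  eapply Rle_trans.
  - apply (Rabs_RInt_le_Rabs _ (fun t => (M * sg) * (t - a))); auto using continuous_affine.
    + intros t Ht. apply (continuous_minus h); auto using continuous_affine.
    + intros t Ht. rewrite Rmult_assoc, <- Hsg; auto.
  - rewrite RInt_affine. assert (0 <= M * (a * a)) by (apply Rmult_le_pos; nra).
    unfold sg. destruct (Rle_dec a 0); [rewrite Rabs_right|rewrite Rabs_left1]; lra.
Qed.

(** * The local inverse of [f] *)

Lemma Rinv_approx dd q e : dd <> 0 -> 0 < e ->
  Rabs (q - dd) < Rabs dd / 2 -> Rabs (q - dd) < e * (Rabs dd * Rabs dd) / 2 ->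
  Rabs (/ q - / dd) < e.
Proof.
  intros Hdd He Hq Hq2.
  assert (Hadd : 0 < Rabs dd) by (apply Rabs_pos_lt; auto).
  assert (Hqa : Rabs dd / 2 <= Rabs q).
  { pose proof (Rabs_triang_inv dd q). rewrite Rabs_minus_sym in Hq. lra. }
  assert (Hq0 : q <> 0) by (intros ->; rewrite Rabs_R0 in Hqa; lra).
  replace (/ q - / dd) with ((dd - q) / (q * dd)) by (field; auto).
  unfold Rdiv. rewrite Rabs_mult, Rabs_inv, Rabs_mult, Rabs_minus_sym.
  apply Rmult_lt_reg_r with (Rabs q * Rabs dd); [apply Rmult_lt_0_compat; lra|].
  rewrite Rmult_assoc, Rinv_l, Rmult_1_r by (apply Rgt_not_eq, Rmult_lt_0_compat; lra).
  apply Rlt_le_trans with (1 := Hq2).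
  apply Rle_trans with (e * (Rabs dd / 2 * Rabs dd)); [right; field|].
  apply Rmult_le_compat_l; [lra|]. apply Rmult_le_compat_r; lra.
Qed.

Lemma is_derive_local_inverse (f g : R -> R) y0 dd :
  continuous g y0 -> locally y0 (fun y => f (g y) = y) -> is_derive f (g y0) dd -> dd <> 0 ->
  is_derive g y0 (/ dd).
Proof.
  intros Hc Hloc Hd Hdd. apply is_derive_Reals. apply is_derive_Reals in Hd.
  destruct (locally_Rabs _ _ Hloc) as [d3 [Hd3 H3]].
  assert (Hf0 : f (g y0) = y0) by (apply H3; rewrite Rminus_diag, Rabs_R0; auto).
  intros e He.
  assert (Hadd : 0 < Rabs dd) by (apply Rabs_pos_lt; auto).
  set (e1 := Rmin (Rabs dd / 2) (e * (Rabs dd * Rabs dd) / 2)).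
  assert (He1 : 0 < e1) by (apply Rmin_pos; [lra|apply Rmult_lt_0_compat; [apply Rmult_lt_0_compat; nra|lra]]).
  destruct (Hd e1 He1) as [d1 Hd1].
  destruct (continuous_Rabs_lt g y0 Hc d1 (cond_pos d1)) as [d2 [Hd2 H2]].
  assert (Hd23 : 0 < Rmin d2 d3) by (apply Rmin_pos; auto).
  exists (mkposreal _ Hd23). intros h Hh0 Hh. simpl in Hh.
  assert (Hh3 : Rabs (y0 + h - y0) < d3)
    by (replace (y0 + h - y0) with h by ring; eapply Rlt_le_trans; [apply Hh|apply Rmin_r]).
  (* The difference quotient of [g] is the inverse of that of [f] at [g y0] with increment [u]. *)
  set (u := g (y0 + h) - g y0).
  assert (Hu : u <> 0).
  { intro Hu0. pose proof (H3 _ Hh3) as Hfg. replace (g (y0 + h)) with (g y0) in Hfg by (unfold u in Hu0; lra). lra. }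
  assert (Hu1 : Rabs u < d1).
  { apply H2. replace (y0 + h - y0) with h by ring. eapply Rlt_le_trans; [apply Hh|apply Rmin_l]. }
  specialize (Hd1 u Hu Hu1).
  replace (g y0 + u) with (g (y0 + h)) in Hd1 by (unfold u; ring).
  rewrite (H3 _ Hh3), Hf0 in Hd1. replace (y0 + h - y0) with h in Hd1 by ring.
  replace (u / h) with (/ (h / u)) by (field; auto).
  apply Rinv_approx; auto; eapply Rlt_le_trans; try apply Hd1; [apply Rmin_l|apply Rmin_r].
Qed.

Lemma between_Rabs_lt a b c alpha r : between a b c ->
  Rabs (a - alpha) < r -> Rabs (b - alpha) < r -> Rabs (c - alpha) < r.
Proof.
  unfold between, Rmin, Rmax. intros Hc Ha Hb.
  apply Rabs_def2 in Ha. apply Rabs_def2 in Hb. apply Rabs_def1;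
    destruct (Rle_dec a b); lra.
Qed.

Section Local_inverse.
Variables (f g : R -> R) (alpha rI : R).
Hypothesis Hf : smooth f.
Hypothesis Hfa : f alpha = 0.
Hypothesis Hd : Derive f alpha <> 0.
Hypothesis Hdb : forall x, Rabs (x - alpha) < rI ->
  Rabs (Derive f x - Derive f alpha) < Rabs (Derive f alpha) / 2.

Lemma Derive_near_root x : Rabs (x - alpha) < rI ->
  Rabs (Derive f alpha) / 2 <= Rabs (Derive f x) <= 3 * Rabs (Derive f alpha) / 2.
Proof.
  intros Hx. specialize (Hdb x Hx). pose proof (Rabs_triang_inv (Derive f x) (Derive f alpha)).
  pose proof (Rabs_triang_inv (Derive f alpha) (Derive f x)). rewrite Rabs_minus_sym in H0. lra.
Qed.

Lemma Derive_neq0_near_root x : Rabs (x - alpha) < rI -> Derive f x <> 0.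
Proof.
  intros Hx H0. pose proof (Derive_near_root x Hx) as Hb. rewrite H0, Rabs_R0 in Hb.
  assert (0 < Rabs (Derive f alpha)) by (apply Rabs_pos_lt; auto). lra.
Qed.

Lemma mvt_near_root x1 x2 : Rabs (x1 - alpha) < rI -> Rabs (x2 - alpha) < rI ->
  exists c, Rabs (c - alpha) < rI /\ Rabs (f x2 - f x1) = Rabs (Derive f c) * Rabs (x2 - x1).
Proof.
  intros H1 H2. destruct (MVT_abs f (Derive f) x1 x2) as [c [Hc Hbc]].
  - intros c Hc. apply is_derive_Reals, Derive_correct, (Hf 1%nat).
  - exists c. split; auto. apply (between_Rabs_lt x1 x2); auto.
Qed.

Lemma f_near_root x : Rabs (x - alpha) < rI ->
  Rabs (Derive f alpha) / 2 * Rabs (x - alpha) <= Rabs (f x) <= 3 * Rabs (Derive f alpha) / 2 * Rabs (x - alpha).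
Proof.
  intros Hx. assert (Ha : Rabs (alpha - alpha) < rI)
    by (pose proof (Rabs_pos (x - alpha)); rewrite Rminus_diag, Rabs_R0; lra).
  destruct (mvt_near_root alpha x Ha Hx) as [c [Hc Hfc]].
  rewrite Hfa, Rminus_0_r in Hfc. rewrite Hfc. pose proof (Derive_near_root c Hc).
  pose proof (Rabs_pos (x - alpha)). split; apply Rmult_le_compat_r; lra.
Qed.

Lemma f_injective_near_root x1 x2 : Rabs (x1 - alpha) < rI -> Rabs (x2 - alpha) < rI ->
  f x1 = f x2 -> x1 = x2.
Proof.
  intros H1 H2 Heq. destruct (mvt_near_root x1 x2 H1 H2) as [c [Hc Hfc]].
  rewrite Heq, Rminus_diag, Rabs_R0 in Hfc. symmetry in Hfc.
  apply Rmult_integral in Hfc as [Hz|Hz].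
  - apply Rabs_eq_0 in Hz. destruct (Derive_neq0_near_root c Hc Hz).
  - apply Rabs_eq_0 in Hz. lra.
Qed.

Variable r0 : R.
Hypothesis Hg : forall y, Rabs y < r0 -> f (g y) = y /\ continuous g y.
Hypothesis HgI : forall y, Rabs y < r0 -> Rabs (g y - alpha) < rI.

Lemma is_derive_inverse_near_0 y : Rabs y < r0 -> is_derive g y (/ Derive f (g y)).
Proof.
  intros Hy. apply (is_derive_local_inverse f g).
  - apply Hg, Hy.
  - apply Rabs_locally with (r0 - Rabs y); [lra|].
    intros z Hz. apply Hg. replace z with ((z - y) + y) by ring.
    eapply Rle_lt_trans; [apply Rabs_triang|lra].
  - apply Derive_correct, (Hf 1%nat).
  - apply Derive_neq0_near_root, HgI, Hy.
Qed.

Lemma inverse_Cn_on n : Cn_on n g (fun y => Rabs y < r0).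
Proof.
  induction n as [|n IH]; [intros y Hy; apply Hg, Hy|]. split.
  - intros y Hy. eexists. apply is_derive_inverse_near_0, Hy.
  - apply Cn_on_ext with (fun y => / Derive f (g y)); [apply open_Rabs_lt_0|..].
    + intros y Hy. symmetry. apply is_derive_unique, is_derive_inverse_near_0, Hy.
    + set (I := fun x => Rabs (x - alpha) < rI).
      apply (Cn_on_comp n (fun x => / Derive f x) g _ I); auto; try apply open_Rabs_lt_0; try apply open_Rabs_lt.
      apply (Cn_on_comp n Rinv (Derive f) I (fun x => x <> 0)); try apply open_Rabs_lt.
      * apply open_neq.
      * apply Cn_on_Rinv.
      * apply (smooth_Cn_on f Hf n 1 I).
      * exact Derive_neq0_near_root.
Qed.

Lemma inverse_left x : Rabs (x - alpha) < rI -> Rabs (f x) < r0 -> g (f x) = x.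
Proof. intros Hx Hfx. apply f_injective_near_root; auto. apply Hg, Hfx. Qed.

End Local_inverse.

Lemma local_inverse_setup (f g : R -> R) alpha r :
  smooth f -> Derive f alpha <> 0 -> 0 < r -> g 0 = alpha ->
  (forall y, Rabs y < r -> f (g y) = y /\ continuous g y) ->
  exists rI r0, 0 < rI /\ 0 < r0 /\
   (forall x, Rabs (x - alpha) < rI -> Rabs (Derive f x - Derive f alpha) < Rabs (Derive f alpha) / 2) /\
   (forall n, Cn_on n g (fun y => Rabs y < r0)) /\
   (forall y, Rabs y < r0 -> Derive g y = / Derive f (g y)) /\
   (forall x, Rabs (x - alpha) < rI -> Rabs (f x) < r0 -> g (f x) = x).
Proof.
  intros Hf Hd Hr Hg0 Hg.
  assert (Hcd : continuous (Derive f) alpha) by apply ex_derive_continuous_R, (Hf 2%nat alpha).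
  destruct (continuous_Rabs_lt _ _ Hcd (Rabs (Derive f alpha) / 2)) as [rI [HrI Hdb]];
    [assert (0 < Rabs (Derive f alpha)) by (apply Rabs_pos_lt; auto); lra|].
  assert (Hcg : continuous g 0) by (apply Hg; rewrite Rabs_R0; auto).
  destruct (continuous_Rabs_lt g 0 Hcg rI HrI) as [r1 [Hr1 Hgr1]].
  set (r0 := Rmin r1 r).
  assert (Hr0 : forall y, Rabs y < r0 -> Rabs y < r1 /\ Rabs y < r)
    by (intros y Hy; split; eapply Rlt_le_trans; try apply Hy; [apply Rmin_l|apply Rmin_r]).
  assert (Hg' : forall y, Rabs y < r0 -> f (g y) = y /\ continuous g y) by (intros y Hy; apply Hg, Hr0, Hy).
  assert (HgI : forall y, Rabs y < r0 -> Rabs (g y - alpha) < rI)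
    by (intros y Hy; rewrite <- Hg0; apply Hgr1; rewrite Rminus_0_r; apply Hr0, Hy).
  exists rI, r0. repeat split; auto.
  - apply Rmin_pos; auto.
  - intros n. apply (inverse_Cn_on f g alpha rI Hf Hd Hdb r0 Hg' HgI).
  - intros y Hy. apply is_derive_unique, (is_derive_inverse_near_0 f g alpha rI Hf Hd Hdb r0 Hg' HgI y Hy).
  - apply (inverse_left f g alpha rI Hf Hd Hdb r0 Hg' HgI).
Qed.

(** * The error of one step *)

Definition interp_lead (s : nat) (g : R -> R) :=
  Derive_n (Derive g) s 0 / INR (Factorial.fact s).

Lemma interp_deriv_error (s' : nat) (g : R -> R) r0 : 0 < r0 ->
  Cn_on (S (S s')) g (fun y => Rabs y < r0) ->
  forall eps, 0 < eps -> exists rho, 0 < rho /\ rho < r0 /\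
  forall (y : nat -> R) c, (forall k, (k < S s')%nat -> Rabs (y k) < rho) ->
   (forall i j, (i < S s')%nat -> (j < S s')%nat -> i <> j -> y i <> y j) ->
   (forall k, (k < S s')%nat -> Derive (poly_eval c (S s')) (y k) = Derive g (y k)) ->
   forall t, Rabs t < rho ->
   Rabs (Derive g t - Derive (poly_eval c (S s')) t - interp_lead (S s') g * node_poly (S s') y t)
     <= eps * Rabs (node_poly (S s') y t).
Proof.
  intros Hr0 [_ HC] eps Heps.
  set (D := fun y => Rabs y < r0).
  assert (HD : open D) by apply open_Rabs_lt_0.
  assert (Hcont : continuous (Derive_n (Derive g) (S s')) 0).
  { apply (Cn_on_Derive_n D HD (S s') 0 (Derive g)); [rewrite Nat.add_0_r; exact HC|].
    unfold D. rewrite Rabs_R0. auto. }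
  assert (Hf : 0 < INR (Factorial.fact (S s'))) by (apply lt_0_INR, Factorial.lt_O_fact).
  destruct (continuous_Rabs_lt _ _ Hcont (eps * INR (Factorial.fact (S s')))) as [de [Hde Hde2]];
    [apply Rmult_lt_0_compat; auto|].
  set (rho := Rmin de r0 / 2).
  assert (Hrho : 0 < rho) by (apply Rmult_lt_0_compat; [apply Rmin_pos|]; lra).
  assert (Hrho1 : rho < de) by (unfold rho; pose proof (Rmin_l de r0); lra).
  assert (Hrho2 : rho < r0) by (unfold rho; pose proof (Rmin_r de r0); lra).
  exists rho. split; auto. split; auto.
  intros y c Hy Hinj Hint t Ht.
  destruct (interpolation_remainder s' (Derive g) (Derive (poly_eval c (S s'))) (INR (S s') * c (S s')) y D
              (- rho) rho HD) with t as [xi [Hxi1 ->]]; auto.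
  - intros x Hx. unfold D. apply Rabs_def1; lra.
  - apply (is_poly_poly_eval (S s') c).
  - intros k Hk. specialize (Hy k Hk). apply Rabs_def2 in Hy. lra.
  - apply Rabs_def2 in Ht. lra.
  - set (F := INR (Factorial.fact (S s'))) in *. set (om := node_poly (S s') y t).
    set (dxi := Derive_n (Derive g) (S s') xi). set (d0 := Derive_n (Derive g) (S s') 0).
    assert (Hxi : Rabs (dxi - d0) < eps * F).
    { apply Hde2. rewrite Rminus_0_r. apply Rle_lt_trans with rho; auto. apply Rabs_le; lra. }
    unfold interp_lead. fold F d0.
    replace (dxi / F * om - d0 / F * om) with ((dxi - d0) * om / F) by (field; lra).
    unfold Rdiv. rewrite !Rabs_mult, Rabs_inv, (Rabs_right F) by lra.
    apply (Rmult_le_reg_r F); auto. rewrite Rmult_assoc, Rinv_l, Rmult_1_r by lra.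
    pose proof (Rabs_pos om). nra.
Qed.

Section Step_error.
Variables (s' : nat) (h : R -> R) (y : nat -> R) (A eps : R).
Let a := y s'.
Hypothesis Heps : 0 <= eps.
Hypothesis Hh : forall t, between a 0 t -> continuous h t.
Hypothesis Hpw : forall t, between a 0 t ->
  Rabs (h t - A * node_poly (S s') y t) <= eps * Rabs (node_poly (S s') y t).

Lemma RInt_step_error_bound rho : (forall k, (k < s')%nat -> Rabs (y k) < rho) -> Rabs a < rho ->
  Rabs (RInt h a 0) <= (Rabs A + eps) * (2 * rho) ^ s' * (a * a) / 2.
Proof.
  intros Hy Ha. pose proof (Rabs_pos a).
  replace (RInt h a 0) with (RInt h a 0 - 0 * (a * a) / 2) by lra.
  apply RInt_near_affine; auto.
  - apply Rmult_le_pos; [pose proof (Rabs_pos A); lra|apply pow_le; lra].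
  - intros t Ht. specialize (Hpw t Ht). pose proof (between_0_Rabs a t Ht).
    unfold node_poly in Hpw. simpl rprod in Hpw. fold a in Hpw.
    set (om := rprod s' (fun k => t - y k)) in *.
    assert (Hb : Rabs om <= (2 * rho) ^ s').
    { apply Rabs_rprod_le; [lra|]. intros k Hk. pose proof (Hy k Hk).
      unfold Rminus. eapply Rle_trans; [apply Rabs_triang|]. rewrite Rabs_Ropp. lra. }
    replace (h t - 0 * (t - a)) with ((h t - A * (om * (t - a))) + A * (om * (t - a))) by ring.
    eapply Rle_trans; [apply Rabs_triang|]. rewrite !Rabs_mult in *.
    pose proof (Rabs_pos (t - a)). pose proof (Rabs_pos A). pose proof (Rabs_pos om).
    apply Rle_trans with ((eps + Rabs A) * (Rabs om * Rabs (t - a))); [lra|].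
    replace ((Rabs A + eps) * (2 * rho) ^ s' * Rabs (t - a))
      with ((eps + Rabs A) * ((2 * rho) ^ s' * Rabs (t - a))) by ring.
    apply Rmult_le_compat_l; [lra|]. apply Rmult_le_compat_r; auto.
Qed.

(* When [a] is much smaller than the other nodes, [node_poly] is close to [P (t - a)] on [[a, 0]]. *)
Lemma RInt_step_error_asymptotic tau : 0 <= tau ->
  (forall k, (k < s')%nat -> Rabs a <= tau * Rabs (y k)) ->
  let P := rprod s' (fun k => - y k) in
  Rabs (RInt h a 0 - A * P * (a * a) / 2)
    <= (eps * (1 + tau) ^ s' + Rabs A * ((1 + tau) ^ s' - 1)) * Rabs P * (a * a) / 2.
Proof.
  intros Htau Hsmall P.
  assert (H1 : 1 <= (1 + tau) ^ s') by (apply pow_R1_Rle; lra).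
  apply RInt_near_affine; auto.
  - apply Rmult_le_pos; [|apply Rabs_pos].
    apply Rplus_le_le_0_compat; apply Rmult_le_pos; try apply pow_le; try apply Rabs_pos; lra.
  - intros t Ht. specialize (Hpw t Ht). pose proof (between_0_Rabs a t Ht).
    unfold node_poly in Hpw. simpl rprod in Hpw. fold a in Hpw.
    set (om := rprod s' (fun k => t - y k)) in *.
    assert (Hpp : Rabs (om - P) <= ((1 + tau) ^ s' - 1) * Rabs P).
    { apply rprod_perturb; auto. intros k Hk.
      replace (t - y k - - y k) with t by ring. rewrite Rabs_Ropp. specialize (Hsmall k Hk). lra. }
    assert (Hpa : Rabs om <= (1 + tau) ^ s' * Rabs P).
    { replace om with ((om - P) + P) by ring. eapply Rle_trans; [apply Rabs_triang|lra]. }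
    replace (h t - A * P * (t - a)) with ((h t - A * (om * (t - a))) + A * (om - P) * (t - a)) by ring.
    eapply Rle_trans; [apply Rabs_triang|]. rewrite !Rabs_mult. rewrite Rabs_mult in Hpw.
    pose proof (Rabs_pos (t - a)). pose proof (Rabs_pos A). pose proof (Rabs_pos om).
    apply Rle_trans with (eps * ((1 + tau) ^ s' * Rabs P * Rabs (t - a))
                          + Rabs A * (((1 + tau) ^ s' - 1) * Rabs P) * Rabs (t - a)); [|right; ring].
    apply Rplus_le_compat.
    + eapply Rle_trans; [apply Hpw|]. apply Rmult_le_compat_l; [lra|]. apply Rmult_le_compat_r; auto.
    + apply Rmult_le_compat_r; auto. apply Rmult_le_compat_l; auto.
Qed.

End Step_error.

Lemma AB_step_error (s' : nat) (g : R -> R) r0 : 0 < r0 ->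
  Cn_on (S (S s')) g (fun y => Rabs y < r0) ->
  let A := interp_lead (S s') g in
  forall eps, 0 < eps -> exists rho, 0 < rho /\ rho < r0 /\
  forall (y : nat -> R) c, (forall k, (k < S s')%nat -> Rabs (y k) < rho) ->
   (forall i j, (i < S s')%nat -> (j < S s')%nat -> i <> j -> y i <> y j) ->
   (forall k, (k < S s')%nat -> Derive (poly_eval c (S s')) (y k) = Derive g (y k)) ->
   let a := y s' in let P := rprod s' (fun k => - y k) in
   let E := (g 0 - poly_eval c (S s') 0) - (g a - poly_eval c (S s') a) in
   Rabs E <= (Rabs A + eps) * (2 * rho) ^ s' * (a * a) / 2 /\
   (forall tau, 0 <= tau -> (forall k, (k < s')%nat -> Rabs a <= tau * Rabs (y k)) ->
    Rabs (E - A * P * (a * a) / 2)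
      <= (eps * (1 + tau) ^ s' + Rabs A * ((1 + tau) ^ s' - 1)) * Rabs P * (a * a) / 2).
Proof.
  intros Hr0 HC A eps Heps.
  destruct (interp_deriv_error s' g r0 Hr0 HC eps Heps) as [rho [Hrho1 [Hrho2 Hpw]]].
  exists rho. split; auto. split; auto.
  intros y c Hy Hinj Hint a P E.
  set (D := fun y => Rabs y < r0). set (H := poly_eval c (S s')).
  set (h := fun t => Derive g t - Derive H t).
  assert (Ha : Rabs a < rho) by (apply Hy; lia).
  assert (HD : forall t, between a 0 t -> D t) by (intros t Ht; apply between_0_Rabs in Ht; unfold D; lra).
  destruct HC as [Hgd HCg].
  assert (HHd : forall t, ex_derive H t) by (apply (is_poly_ex_derive _ _ _ (is_poly_poly_eval (S s') c))).
  assert (HHc : forall t, continuous (Derive H) t).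
  { intros t. apply ex_derive_continuous_R. destruct (is_poly_poly_eval (S s') c) as [_ HH'].
    apply (is_poly_ex_derive _ _ _ HH'). }
  assert (Hh : forall t, between a 0 t -> continuous h t).
  { intros t Ht. apply (continuous_minus (Derive g)); [apply (Cn_on_continuous D (S s') _ HCg), HD, Ht|apply HHc]. }
  assert (HE : E = RInt h a 0).
  { assert (HG : RInt (Derive (fun t => g t - H t)) a 0 = E).
    { rewrite RInt_Derive.
      - reflexivity.
      - intros x Hx. apply (ex_derive_minus g); [apply Hgd, HD, Hx|auto].
      - intros x Hx. apply continuous_ext_loc with h; [|apply Hh, Hx].
        apply (open_eq_locally D); [apply open_Rabs_lt_0| |apply HD, Hx].
        intros z Hz. unfold h. rewrite Derive_minus; auto. }
    rewrite <- HG. apply RInt_ext. intros x Hx. apply Derive_minus; auto.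
    apply Hgd, HD. unfold between. lra. }
  assert (Hpw' : forall t, between a 0 t ->
    Rabs (h t - A * node_poly (S s') y t) <= eps * Rabs (node_poly (S s') y t)).
  { intros t Ht. apply Hpw; auto. apply between_0_Rabs in Ht. lra. }
  rewrite HE. split.
  - apply (RInt_step_error_bound s' h y A eps); auto; lra.
  - intros tau Htau Hsmall. apply (RInt_step_error_asymptotic s' h y A eps); auto. lra.
Qed.

(** * The largest root of the rate polynomial *)

Fixpoint inv_pow_sum (k : nat) (q : R) : R :=
  match k with O => 0 | S k' => inv_pow_sum k' q + / q ^ (S k') end.

(* For [q > 1], [rate_poly s q] has the sign of [rate_fun s q], which is increasing in [q]. *)
Definition rate_fun (s : nat) (q : R) := 1 - / q - inv_pow_sum s q.

Lemma inv_pow_sum_geom k q : 0 < q -> (q - 1) * inv_pow_sum k q = 1 - / q ^ k.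
Proof.
  intros Hq. induction k as [|k IH]; simpl; [field|].
  rewrite Rmult_plus_distr_l, IH. field. split; [apply pow_nonzero|]; lra.
Qed.

Lemma inv_pow_sum_S_mul i p : 0 < p -> p * inv_pow_sum (S i) p = 1 + inv_pow_sum i p.
Proof.
  intros Hp. induction i as [|i IH]; [simpl; field; lra|].
  change (inv_pow_sum (S (S i)) p) with (inv_pow_sum (S i) p + / p ^ (S (S i))).
  change (inv_pow_sum (S i) p) with (inv_pow_sum i p + / p ^ (S i)) at 2.
  rewrite Rmult_plus_distr_l, IH.
  replace (p * / p ^ S (S i)) with (/ p ^ S i); [ring|].
  change (p ^ S (S i)) with (p * p ^ S i). field. split; [apply pow_nonzero|]; lra.
Qed.

Lemma pow_lt_base n q1 q2 : 0 < q1 -> q1 < q2 -> q1 ^ (S n) < q2 ^ (S n).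
Proof.
  intros H1 H12. induction n as [|n IH]; [simpl; lra|].
  change (q1 * q1 ^ S n < q2 * q2 ^ S n).
  assert (0 < q1 ^ S n) by (apply pow_lt; lra). nra.
Qed.

Lemma inv_pow_sum_decreasing k q1 q2 : 0 < q1 -> q1 < q2 -> inv_pow_sum (S k) q2 < inv_pow_sum (S k) q1.
Proof.
  intros H1 H12. induction k as [|k IH].
  - simpl. rewrite !Rplus_0_l, !Rmult_1_r. apply Rinv_lt_contravar; nra.
  - change (inv_pow_sum (S k) q2 + / q2 ^ (S (S k)) < inv_pow_sum (S k) q1 + / q1 ^ (S (S k))).
    apply Rplus_lt_compat; [exact IH|]. apply Rinv_lt_contravar.
    + apply Rmult_lt_0_compat; apply pow_lt; lra.
    + apply pow_lt_base; lra.
Qed.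

Lemma rate_fun_increasing s q1 q2 : 0 < q1 -> q1 < q2 -> rate_fun (S s) q1 < rate_fun (S s) q2.
Proof.
  intros H1 H12. unfold rate_fun. pose proof (inv_pow_sum_decreasing s q1 q2 H1 H12).
  assert (/ q2 < / q1) by (apply Rinv_lt_contravar; nra). lra.
Qed.

Lemma rate_poly_S s q : rate_poly (S s) q = q ^ s * (q * q - 3 * q + 1) + 1.
Proof. unfold rate_poly. replace (S s - 1)%nat with s by lia. simpl. ring. Qed.

Lemma rate_poly_factor s q : 1 < q -> rate_poly (S s) q = (q - 1) * q ^ (S s) * rate_fun (S s) q.
Proof.
  intros Hq. rewrite rate_poly_S. unfold rate_fun.
  replace ((q - 1) * q ^ S s * (1 - / q - inv_pow_sum (S s) q))
    with ((q - 1) * q ^ S s * (1 - / q) - q ^ S s * ((q - 1) * inv_pow_sum (S s) q)) by ring.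
  rewrite inv_pow_sum_geom by lra. simpl. field. split; [apply pow_nonzero|]; lra.
Qed.

Lemma rate_poly_root_iff s q : 1 < q -> rate_poly (S s) q = 0 <-> rate_fun (S s) q = 0.
Proof.
  intros Hq. rewrite rate_poly_factor by lra.
  assert (0 < (q - 1) * q ^ S s) by (apply Rmult_lt_0_compat; [|apply pow_lt]; lra).
  split; intros H0; [|rewrite H0; ring].
  apply Rmult_integral in H0 as [H0|H0]; lra.
Qed.

Lemma rate_poly_continuity s : continuity (rate_poly s).
Proof. unfold rate_poly. reg. Qed.

Lemma rate_poly_3_2 s : rate_poly (S s) (3 / 2) < 0.
Proof. rewrite rate_poly_S. assert (1 <= (3 / 2) ^ s) by (apply pow_R1_Rle; lra). nra. Qed.

Lemma rate_poly_3 s : 0 < rate_poly (S s) 3.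
Proof. rewrite rate_poly_S. assert (0 < 3 ^ s) by (apply pow_lt; lra). nra. Qed.

Lemma Rlt_3_2_3 : 3 / 2 < 3. Proof. lra. Qed.

(* [rate 0] is an unused junk value. *)
Definition rate (s : nat) : R :=
  match s with
  | O => 0
  | S s' => proj1_sig (IVT (rate_poly (S s')) (3 / 2) 3 (rate_poly_continuity (S s')) Rlt_3_2_3
                          (rate_poly_3_2 s') (rate_poly_3 s'))
  end.

Definition golden_sq := (3 + sqrt 5) / 2.

Lemma sqrt5_bounds : 2 < sqrt 5 < 3.
Proof.
  split.
  - replace 2 with (sqrt (2 * 2)) by (rewrite sqrt_square; lra). apply sqrt_lt_1; lra.
  - replace 3 with (sqrt (3 * 3)) by (rewrite sqrt_square; lra). apply sqrt_lt_1; lra.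
Qed.

Lemma golden_sq_factor q : q * q - 3 * q + 1 = (q - golden_sq) * (q - (3 - sqrt 5) / 2).
Proof. unfold golden_sq. pose proof (sqrt_sqrt 5 ltac:(lra)). nra. Qed.

Section Rate.
Variable s : nat.
Let p := rate (S s).

Lemma rate_spec : 3 / 2 <= p <= 3 /\ rate_poly (S s) p = 0.
Proof. unfold p. simpl. destruct (IVT _ _ _ _ _ _ _) as [z Hz]. exact Hz. Qed.

Lemma rate_fun_rate : rate_fun (S s) p = 0.
Proof. destruct rate_spec as [Hb Hr]. apply rate_poly_root_iff; auto. lra. Qed.

Lemma rate_ge_2 : 2 <= p.
Proof.
  destruct rate_spec as [Hb _]. destruct (Rle_dec 2 p) as [|Hn]; auto.
  assert (Hlt : rate_fun (S s) p < rate_fun (S s) 2) by (apply rate_fun_increasing; lra).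
  assert (Hneg : rate_poly (S s) 2 <= 0).
  { rewrite rate_poly_S. assert (1 <= 2 ^ s) by (apply pow_R1_Rle; lra). nra. }
  rewrite rate_poly_factor in Hneg by lra.
  assert (0 < (2 - 1) * 2 ^ S s) by (apply Rmult_lt_0_compat; [|apply pow_lt]; lra).
  rewrite rate_fun_rate in Hlt. nra.
Qed.

Lemma rate_root_eq : p ^ s * (p * p - 3 * p + 1) = -1.
Proof. destruct rate_spec as [_ Hr]. rewrite rate_poly_S in Hr. lra. Qed.

Lemma rate_lt_golden_sq : p < golden_sq.
Proof.
  pose proof rate_ge_2. pose proof rate_root_eq. pose proof sqrt5_bounds.
  destruct (Rlt_dec p golden_sq) as [|Hn]; auto.
  assert (0 <= p * p - 3 * p + 1)
    by (rewrite golden_sq_factor; apply Rmult_le_pos; unfold golden_sq in *; lra).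
  assert (0 < p ^ s) by (apply pow_lt; lra). nra.
Qed.

Lemma rate_largest_root q : rate_poly (S s) q = 0 -> q <= p.
Proof.
  intros Hq. pose proof rate_ge_2. destruct (Rle_dec q 1) as [|Hq1]; [lra|].
  apply rate_poly_root_iff in Hq; [|lra].
  destruct (Rle_dec q p) as [|Hn]; auto.
  assert (rate_fun (S s) p < rate_fun (S s) q) by (apply rate_fun_increasing; lra).
  rewrite rate_fun_rate in *. lra.
Qed.

Lemma inv_pow_sum_rate : inv_pow_sum s p = p - 2.
Proof.
  pose proof rate_ge_2. pose proof rate_root_eq.
  assert (0 < p ^ s) by (apply pow_lt; lra).
  apply (Rmult_eq_reg_l (p - 1)); [|lra]. rewrite inv_pow_sum_geom by lra.
  apply (Rmult_eq_reg_l (p ^ s)); [|lra].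
  field_simplify; [nra|lra].
Qed.

Lemma rate_close : golden_sq - (/ 2) ^ s <= p.
Proof.
  pose proof rate_ge_2. pose proof rate_lt_golden_sq. pose proof rate_root_eq as Hq.
  pose proof sqrt5_bounds. rewrite golden_sq_factor in Hq.
  assert (Hp : 0 < p ^ s) by (apply pow_lt; lra).
  assert (Hps : 2 ^ s <= p ^ s) by (apply pow_incr; lra).
  assert (H2s : 0 < 2 ^ s) by (apply pow_lt; lra).
  rewrite pow_inv.
  assert (golden_sq - p <= / p ^ s).
  { apply (Rmult_le_reg_r (p ^ s)); auto. rewrite Rinv_l by lra. unfold golden_sq in *. nra. }
  assert (/ p ^ s <= / 2 ^ s) by (apply Rinv_le_contravar; auto).
  lra.
Qed.

End Rate.

Lemma rate_increasing s : rate (S s) < rate (S (S s)).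
Proof.
  pose proof (rate_ge_2 s). pose proof (rate_ge_2 (S s)).
  pose proof (rate_fun_rate s) as H1. pose proof (rate_fun_rate (S s)) as H2.
  set (p1 := rate (S s)) in *. set (p2 := rate (S (S s))) in *.
  assert (E : rate_fun (S (S s)) p2 = rate_fun (S s) p2 - / p2 ^ (S (S s))) by (unfold rate_fun; simpl; ring).
  assert (0 < / p2 ^ (S (S s))) by (apply Rinv_0_lt_compat, pow_lt; lra).
  destruct (Rlt_dec p1 p2) as [|Hn]; auto.
  destruct (Req_dec p1 p2) as [Heq|Hne]; [rewrite Heq in H1; lra|].
  assert (rate_fun (S s) p2 < rate_fun (S s) p1) by (apply rate_fun_increasing; lra). lra.
Qed.

Lemma is_lim_seq_rate : is_lim_seq rate golden_sq.
Proof.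
  apply is_lim_seq_incr_1.
  apply is_lim_seq_le_le with (u := fun n => golden_sq - (/ 2) ^ n) (w := fun _ => golden_sq).
  - intros n. split; [apply rate_close|left; apply rate_lt_golden_sq].
  - replace (Finite golden_sq) with (Rbar_minus golden_sq 0) by (simpl; f_equal; ring).
    apply is_lim_seq_minus'; [apply is_lim_seq_const|]. apply is_lim_seq_geom. rewrite Rabs_right; lra.
  - apply is_lim_seq_const.
Qed.

(** * Linear recurrences with positive weights *)

Fixpoint max_upto (k : nat) (u : nat -> R) : R :=
  match k with O => u O | S k' => Rmax (max_upto k' u) (u (S k')) end.

Fixpoint min_upto (k : nat) (u : nat -> R) : R :=
  match k with O => u O | S k' => Rmin (min_upto k' u) (u (S k')) end.

Lemma max_upto_ge k u i : (i <= k)%nat -> u i <= max_upto k u.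
Proof.
  induction k; simpl; intros H; [replace i with O by lia; lra|].
  destruct (Nat.eq_dec i (S k)) as [->|]; [apply Rmax_r|].
  eapply Rle_trans; [apply IHk; lia|apply Rmax_l].
Qed.

Lemma min_upto_le k u i : (i <= k)%nat -> min_upto k u <= u i.
Proof.
  induction k; simpl; intros H; [replace i with O by lia; lra|].
  destruct (Nat.eq_dec i (S k)) as [->|]; [apply Rmin_r|].
  eapply Rle_trans; [apply Rmin_l|apply IHk; lia].
Qed.

Lemma max_upto_attained k u : exists i, (i <= k)%nat /\ u i = max_upto k u.
Proof.
  induction k; simpl; [exists O; auto|].
  destruct IHk as [i [Hi Hui]]. unfold Rmax. destruct (Rle_dec (max_upto k u) (u (S k))).
  - exists (S k); auto.
  - exists i; split; auto.
Qed.

Lemma min_upto_attained k u : exists i, (i <= k)%nat /\ u i = min_upto k u.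
Proof.
  induction k; simpl; [exists O; auto|].
  destruct IHk as [i [Hi Hui]]. unfold Rmin. destruct (Rle_dec (min_upto k u) (u (S k))).
  - exists i; split; auto.
  - exists (S k); auto.
Qed.

Lemma pow_le_decreasing lam k n : 0 <= lam <= 1 -> (k <= n)%nat -> lam ^ n <= lam ^ k.
Proof.
  intros Hl Hkn. replace n with (k + (n - k))%nat by lia. rewrite pow_add.
  assert (0 <= lam ^ k) by (apply pow_le; lra).
  assert (lam ^ (n - k) <= 1).
  { clear Hkn. induction (n - k)%nat; simpl; [lra|]. assert (0 <= lam ^ n0) by (apply pow_le; lra). nra. }
  nra.
Qed.

Lemma convex_comb_upper s (om v : nat -> R) lam U j dl :
  rsum s om = 1 -> (forall i, (i < s)%nat -> lam <= om i) -> 0 <= lam ->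
  (forall i, (i < s)%nat -> v i <= U) -> (j < s)%nat -> v j <= U - dl -> 0 <= dl ->
  rsum s (fun i => om i * v i) <= U - lam * dl.
Proof.
  intros Hs Hl Hl0 Hv Hj Hvj Hdl.
  replace (rsum s (fun i => om i * v i)) with (U * rsum s om - rsum s (fun i => om i * (U - v i)))
    by (rewrite <- rsum_scal, <- rsum_minus; apply rsum_ext; intros; ring).
  rewrite Hs.
  assert (om j * (U - v j) <= rsum s (fun i => om i * (U - v i))).
  { apply (rsum_ge_term s (fun i => om i * (U - v i))); auto.
    intros i Hi. specialize (Hl i Hi). specialize (Hv i Hi). apply Rmult_le_pos; lra. }
  assert (lam * dl <= om j * (U - v j)) by (specialize (Hl j Hj); apply Rmult_le_compat; lra).
  lra.
Qed.

Definition window_max (s1 : nat) (w : nat -> R) N := max_upto s1 (fun i => w (N + i)%nat).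
Definition window_min (s1 : nat) (w : nat -> R) N := min_upto s1 (fun i => w (N + i)%nat).
Definition oscillation s1 w N := window_max s1 w N - window_min s1 w N.

Lemma window_bounds s1 w N i : (i <= s1)%nat -> window_min s1 w N <= w (N + i)%nat <= window_max s1 w N.
Proof.
  intros Hi. split; [apply (min_upto_le s1 (fun i => w (N + i)%nat))|apply (max_upto_ge s1 (fun i => w (N + i)%nat))];
    auto.
Qed.

Lemma oscillation_nonneg s1 w N : 0 <= oscillation s1 w N.
Proof. destruct (window_bounds s1 w N 0 ltac:(lia)). unfold oscillation. lra. Qed.

Section Oscillation.
Variables (s1 : nat) (om : nat -> R) (lam : R) (w e : nat -> R).
Hypothesis Hsum : rsum (S s1) om = 1.
Hypothesis Hlam : forall i, (i < S s1)%nat -> lam <= om i.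
Hypothesis Hlam0 : 0 <= lam.
Hypothesis Hrec : forall n, w (n + S s1)%nat = rsum (S s1) (fun i => om i * w (n + i)%nat) + e n.

(* Each new term is a convex combination of the last [S s1] ones, and the
   minimum [m] of the current window keeps pulling it down. *)
Lemma next_window_upper N m M eta :
  (forall i, (i <= s1)%nat -> m <= w (N + i)%nat <= M) -> (exists j, (j <= s1)%nat /\ w (N + j)%nat = m) ->
  (forall k, (k <= s1)%nat -> Rabs (e (N + k)%nat) <= eta) ->
  forall k, (k <= s1)%nat -> w (N + S s1 + k)%nat <= M + INR (S k) * eta - lam ^ (S k) * (M - m).
Proof.
  intros Hwin [j [Hj Hwj]] He.
  assert (HmM : m <= M) by (destruct (Hwin O ltac:(lia)); lra).
  assert (Heta : 0 <= eta) by (pose proof (He O ltac:(lia)); pose proof (Rabs_pos (e (N + 0)%nat)); lra).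
  intros k. induction k as [k IH] using Wf_nat.lt_wf_ind. intros Hk.
  replace (N + S s1 + k)%nat with ((N + k) + S s1)%nat by lia. rewrite Hrec.
  assert (Hek : e (N + k)%nat <= eta) by (pose proof (He k Hk); pose proof (Rle_abs (e (N + k)%nat)); lra).
  assert (Hv : forall i, (i < S s1)%nat -> w (N + k + i)%nat <= M + INR k * eta).
  { intros i Hi. destruct (Compare_dec.le_lt_dec (S s1) (k + i)) as [Hge|Hlt].
    - replace (N + k + i)%nat with (N + S s1 + (k + i - S s1))%nat by lia.
      eapply Rle_trans; [apply IH; lia|].
      assert (0 <= lam ^ S (k + i - S s1) * (M - m)) by (apply Rmult_le_pos; [apply pow_le|]; lra).
      assert (INR (S (k + i - S s1)) <= INR k) by (apply le_INR; lia).
      assert (INR (S (k + i - S s1)) * eta <= INR k * eta) by (apply Rmult_le_compat_r; auto). lra.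
    - replace (N + k + i)%nat with (N + (k + i))%nat by lia.
      destruct (Hwin (k + i)%nat ltac:(lia)).
      assert (0 <= INR k * eta) by (apply Rmult_le_pos; auto; apply pos_INR). lra. }
  destruct k as [|k0].
  - assert (Hc : rsum (S s1) (fun i => om i * w (N + 0 + i)%nat) <= M + INR 0 * eta - lam * (M - m)).
    { apply (convex_comb_upper (S s1) om _ lam _ j); auto; [lia| |lra].
      replace (N + 0 + j)%nat with (N + j)%nat by lia. rewrite Hwj. simpl INR. lra. }
    simpl INR in *. simpl pow. lra.
  - assert (Hprev : w (N + S k0 + s1)%nat <= M + INR (S k0) * eta - lam ^ (S k0) * (M - m)).
    { replace (N + S k0 + s1)%nat with (N + S s1 + k0)%nat by lia. apply IH; lia. }
    assert (Hc : rsum (S s1) (fun i => om i * w (N + S k0 + i)%nat)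
                 <= M + INR (S k0) * eta - lam * (lam ^ S k0 * (M - m))).
    { apply (convex_comb_upper (S s1) om _ lam _ s1); auto; try lia.
      apply Rmult_le_pos; [apply pow_le|]; lra. }
    rewrite S_INR with (n := S k0).
    replace (lam ^ S (S k0) * (M - m)) with (lam * (lam ^ S k0 * (M - m))) by (simpl; ring).
    lra.
Qed.

End Oscillation.

Section Oscillation_decay.
Variables (s1 : nat) (om : nat -> R) (lam : R) (w e : nat -> R).
Hypothesis Hsum : rsum (S s1) om = 1.
Hypothesis Hlam : forall i, (i < S s1)%nat -> lam <= om i.
Hypothesis Hlam0 : 0 <= lam.
Hypothesis Hrec : forall n, w (n + S s1)%nat = rsum (S s1) (fun i => om i * w (n + i)%nat) + e n.

Lemma lam_le_1 : lam <= 1.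
Proof.
  rewrite <- Hsum. eapply Rle_trans; [apply Hlam with (i := O); lia|].
  apply rsum_ge_term; [|lia]. intros i Hi. specialize (Hlam i Hi). lra.
Qed.

(* The lower bound is the upper bound for [- w]. *)
Lemma next_window_lower N m M eta :
  (forall i, (i <= s1)%nat -> m <= w (N + i)%nat <= M) -> (exists j, (j <= s1)%nat /\ w (N + j)%nat = M) ->
  (forall k, (k <= s1)%nat -> Rabs (e (N + k)%nat) <= eta) ->
  forall k, (k <= s1)%nat -> m - INR (S k) * eta + lam ^ (S k) * (M - m) <= w (N + S s1 + k)%nat.
Proof.
  intros Hwin [j [Hj Hwj]] He k Hk.
  assert (Hrec' : forall n, - w (n + S s1)%nat = rsum (S s1) (fun i => om i * - w (n + i)%nat) + - e n).
  { intros n. rewrite Hrec.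
    replace (rsum (S s1) (fun i => om i * - w (n + i)%nat))
      with ((-1) * rsum (S s1) (fun i => om i * w (n + i)%nat)); [ring|].
    rewrite <- rsum_scal. apply rsum_ext. intros; ring. }
  assert (Lo : - w (N + S s1 + k)%nat <= - m + INR (S k) * eta - lam ^ S k * (- m - - M)).
  { apply (next_window_upper s1 om lam (fun k => - w k) (fun k => - e k) Hsum Hlam Hlam0 Hrec'); auto.
    - intros i Hi. destruct (Hwin i Hi). lra.
    - exists j. split; auto. rewrite Hwj. reflexivity.
    - intros k0 Hk0. rewrite Rabs_Ropp. apply He; auto. }
  lra.
Qed.

Lemma oscillation_step N eta : (forall k, (k <= s1)%nat -> Rabs (e (N + k)%nat) <= eta) ->
  oscillation s1 w (N + S s1) <= (1 - 2 * lam ^ (S s1)) * oscillation s1 w N + 2 * INR (S s1) * eta.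
Proof.
  intros He.
  set (M := window_max s1 w N). set (m := window_min s1 w N).
  assert (Hwin : forall i, (i <= s1)%nat -> m <= w (N + i)%nat <= M) by (intros; apply window_bounds; auto).
  assert (Heta : 0 <= eta) by (pose proof (He O ltac:(lia)); pose proof (Rabs_pos (e (N + 0)%nat)); lra).
  assert (HmM : m <= M) by (destruct (Hwin O ltac:(lia)); lra).
  assert (Hpow : forall k, (k <= s1)%nat -> lam ^ S s1 * (M - m) <= lam ^ S k * (M - m))
    by (intros; pose proof lam_le_1; apply Rmult_le_compat_r; [lra|apply pow_le_decreasing; lra || lia]).
  assert (Herr : forall k, (k <= s1)%nat -> INR (S k) * eta <= INR (S s1) * eta)
    by (intros; apply Rmult_le_compat_r; auto; apply le_INR; lia).
  unfold oscillation at 1, window_max, window_min.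
  destruct (max_upto_attained s1 (fun i => w (N + S s1 + i)%nat)) as [i1 [Hi1 <-]].
  destruct (min_upto_attained s1 (fun i => w (N + S s1 + i)%nat)) as [i2 [Hi2 <-]].
  pose proof (next_window_upper s1 om lam w e Hsum Hlam Hlam0 Hrec N m M eta Hwin
                (min_upto_attained s1 (fun i => w (N + i)%nat)) He i1 Hi1).
  pose proof (next_window_lower N m M eta Hwin (max_upto_attained s1 (fun i => w (N + i)%nat)) He i2 Hi2).
  specialize (Hpow i1 Hi1) as Hp1. specialize (Hpow i2 Hi2) as Hp2.
  specialize (Herr i1 Hi1) as He1. specialize (Herr i2 Hi2) as He2.
  unfold oscillation. fold M m. lra.
Qed.

Lemma oscillation_iter N0 eta : (forall n, (N0 <= n)%nat -> Rabs (e n) <= eta) ->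
  0 < lam -> lam <= 1 / 2 ->
  forall k, oscillation s1 w (N0 + k * S s1)
    <= (1 - 2 * lam ^ (S s1)) ^ k * oscillation s1 w N0 + INR (S s1) * eta / lam ^ (S s1).
Proof.
  intros He Hl0 Hl.
  assert (Hp : 0 < lam ^ S s1) by (apply pow_lt; lra).
  assert (Hp2 : lam ^ S s1 <= 1 / 2)
    by (pose proof (pow_le_decreasing lam 1 (S s1) ltac:(lra) ltac:(lia)) as H1; rewrite pow_1 in H1; lra).
  assert (Heta : 0 <= eta) by (pose proof (He N0 (le_n _)); pose proof (Rabs_pos (e N0)); lra).
  assert (HC : 0 <= INR (S s1) * eta / lam ^ S s1)
    by (apply Rmult_le_pos; [apply Rmult_le_pos; auto; apply pos_INR|left; apply Rinv_0_lt_compat; auto]).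
  induction k as [|k IH].
  - rewrite Nat.mul_0_l, Nat.add_0_r, pow_O. lra.
  - replace (N0 + S k * S s1)%nat with ((N0 + k * S s1) + S s1)%nat by lia.
    eapply Rle_trans; [apply oscillation_step; intros j Hj; apply He; lia|].
    apply Rle_trans with ((1 - 2 * lam ^ S s1) * ((1 - 2 * lam ^ S s1) ^ k * oscillation s1 w N0
                           + INR (S s1) * eta / lam ^ S s1) + 2 * INR (S s1) * eta).
    + apply Rplus_le_compat_r. apply Rmult_le_compat_l; auto. lra.
    + right. set (q := lam ^ S s1) in *. change ((1 - 2 * q) ^ S k) with ((1 - 2 * q) * (1 - 2 * q) ^ k).
      field. lra.
Qed.

End Oscillation_decay.

Definition weight_diff (b : nat -> R) i := b i - match i with O => 0 | S i' => b i' end.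

Lemma rsum_weight_diff b m : rsum (S m) (weight_diff b) = b m.
Proof.
  induction m as [|m IH]; [simpl; unfold weight_diff; ring|].
  simpl in *. rewrite IH. unfold weight_diff. ring.
Qed.

Lemma rsum_by_parts b w n m :
  rsum (S m) (fun i => b i * w (n + S i)%nat) - rsum (S m) (fun i => b i * w (n + i)%nat)
  = b m * w (n + S m)%nat - rsum (S m) (fun i => weight_diff b i * w (n + i)%nat).
Proof.
  induction m as [|m IH]; [simpl; unfold weight_diff; ring|].
  change (rsum (S (S m)) ?u) with (rsum (S m) u + u (S m)).
  replace (rsum (S m) (fun i => b i * w (n + S i)%nat)) with
    (rsum (S m) (fun i => b i * w (n + i)%nat) + b m * w (n + S m)%nat
     - rsum (S m) (fun i => weight_diff b i * w (n + i)%nat)) by lra.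
  unfold weight_diff at 3. ring.
Qed.

Section Averaged_recurrence.
Variables (s1 : nat) (b z c : nat -> R) (lam L : R).
Hypothesis Hb1 : b s1 = 1.
Hypothesis Hlam0 : 0 < lam.
Hypothesis Hlam : forall i, (i < S s1)%nat -> lam <= weight_diff b i.
Hypothesis Hlev : forall n, rsum (S s1) (fun i => b i * z (n + i)%nat) = c n.

Let B := rsum (S s1) b.
Let w n := z n - L / B.
Let eps n := c n - L.

Lemma weights_ge : forall i, (i <= s1)%nat -> lam <= b i.
Proof.
  induction i as [|i IH]; intros Hi.
  - specialize (Hlam 0%nat ltac:(lia)). unfold weight_diff in Hlam. lra.
  - specialize (IH ltac:(lia)). specialize (Hlam (S i) ltac:(lia)). unfold weight_diff in Hlam. lra.
Qed.

Lemma weights_sum_pos : 0 < B.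
Proof.
  unfold B. simpl. assert (0 <= rsum s1 b).
  { apply rsum_nonneg. intros i Hi. pose proof (weights_ge i ltac:(lia)). lra. }
  pose proof (weights_ge s1 (le_n _)). lra.
Qed.

Lemma averaged_deviation n : rsum (S s1) (fun i => b i * w (n + i)%nat) = eps n.
Proof.
  pose proof weights_sum_pos. unfold w, eps. rewrite <- (Hlev n).
  replace (rsum (S s1) (fun i => b i * (z (n + i)%nat - L / B)))
    with (rsum (S s1) (fun i => b i * z (n + i)%nat) - L / B * B)
    by (unfold B; rewrite <- rsum_scal, <- rsum_minus; apply rsum_ext; intros; ring).
  field. lra.
Qed.

Lemma deviation_recurrence n :
  w (n + S s1)%nat = rsum (S s1) (fun i => weight_diff b i * w (n + i)%nat) + (eps (S n) - eps n).
Proof.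
  rewrite <- !averaged_deviation.
  replace (rsum (S s1) (fun i => b i * w (S n + i)%nat))
    with (rsum (S s1) (fun i => b i * w (n + S i)%nat)) by (apply rsum_ext; intros; f_equal; f_equal; lia).
  pose proof (rsum_by_parts b w n s1) as H. rewrite Hb1 in H. lra.
Qed.

(* Since [B w] averages to [eps N] over a window, each term of the window is
   within the oscillation of [eps N / B]. *)
Lemma deviation_window_bound N i : (i <= s1)%nat ->
  Rabs (w (N + i)%nat) <= oscillation s1 w N + Rabs (eps N) / B.
Proof.
  intros Hi. pose proof weights_sum_pos.
  set (M := window_max s1 w N). set (m := window_min s1 w N).
  assert (Hwin : forall j, (j <= s1)%nat -> m <= w (N + j)%nat <= M) by (intros; apply window_bounds; auto).
  assert (Hb : forall j, (j < S s1)%nat -> 0 <= b j) by (intros j Hj; pose proof (weights_ge j ltac:(lia)); lra).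
  assert (Hlo : B * m <= eps N).
  { rewrite <- averaged_deviation.
    unfold B. rewrite <- rsum_mult_r.
    apply rsum_le. intros j Hj. apply Rmult_le_compat_l; [auto|apply Hwin; lia]. }
  assert (Hhi : eps N <= B * M).
  { rewrite <- averaged_deviation.
    unfold B. rewrite <- rsum_mult_r.
    apply rsum_le. intros j Hj. apply Rmult_le_compat_l; [auto|apply Hwin; lia]. }
  assert (Hm : m <= eps N / B) by (apply (Rmult_le_reg_l B); auto; field_simplify; lra).
  assert (HM : eps N / B <= M) by (apply (Rmult_le_reg_l B); auto; field_simplify; lra).
  replace (Rabs (eps N) / B) with (Rabs (eps N / B))
    by (unfold Rdiv; rewrite Rabs_mult, Rabs_inv, (Rabs_right B); lra).
  destruct (Hwin i Hi). unfold oscillation. fold M m.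
  pose proof (Rle_abs (eps N / B)). pose proof (Rle_abs (- (eps N / B))). rewrite Rabs_Ropp in *.
  apply Rabs_le. lra.
Qed.

Lemma oscillation_vanishes (Hc : is_lim_seq c L) tau : 0 < tau ->
  exists N0 K, (forall n, (N0 <= n)%nat -> Rabs (eps n) < tau * B / 4) /\
    forall k, (K <= k)%nat -> oscillation s1 w (N0 + k * S s1) <= tau / 2.
Proof.
  intros Htau. pose proof weights_sum_pos as HB.
  set (lam' := Rmin lam (1 / 2)).
  assert (Hl'0 : 0 < lam') by (apply Rmin_pos; lra).
  assert (Hl'1 : lam' <= 1 / 2) by apply Rmin_r.
  assert (Hsum : rsum (S s1) (weight_diff b) = 1) by (rewrite rsum_weight_diff; auto).
  assert (Hlam' : forall i, (i < S s1)%nat -> lam' <= weight_diff b i)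
    by (intros i Hi; eapply Rle_trans; [apply Rmin_l|auto]).
  assert (Hp : 0 < lam' ^ S s1) by (apply pow_lt; lra).
  assert (Hp2 : lam' ^ S s1 <= 1 / 2)
    by (pose proof (pow_le_decreasing lam' 1 (S s1) ltac:(lra) ltac:(lia)) as H1; rewrite pow_1 in H1; lra).
  set (th := 1 - 2 * lam' ^ S s1).
  assert (HS : 0 < INR (S s1)) by (apply lt_0_INR; lia).
  set (eta := tau * lam' ^ S s1 / (4 * INR (S s1))).
  assert (Heta : 0 < eta) by (unfold eta; apply Rdiv_lt_0_compat; [apply Rmult_lt_0_compat|]; lra).
  assert (Hmin : 0 < Rmin (eta / 2) (tau * B / 4))
    by (apply Rmin_pos; [lra|apply Rmult_lt_0_compat; [apply Rmult_lt_0_compat|]; lra]).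
  apply is_lim_seq_spec in Hc. destruct (Hc (mkposreal _ Hmin)) as [N0 HN0]. simpl in HN0.
  assert (He : forall n, (N0 <= n)%nat -> Rabs (eps (S n) - eps n) <= eta).
  { intros n Hn. pose proof (HN0 n Hn). pose proof (HN0 (S n) ltac:(lia)).
    pose proof (Rmin_l (eta / 2) (tau * B / 4)).
    unfold Rminus. eapply Rle_trans; [apply Rabs_triang|]. rewrite Rabs_Ropp. unfold eps in *. lra. }
  assert (Hit := oscillation_iter s1 (weight_diff b) lam' w (fun n => eps (S n) - eps n)
                   Hsum Hlam' ltac:(lra) deviation_recurrence N0 eta He Hl'0 Hl'1).
  set (D0 := oscillation s1 w N0).
  assert (HD0 : 0 <= D0) by apply oscillation_nonneg.
  destruct (pow_lt_1_zero th ltac:(rewrite Rabs_right; unfold th; lra) (tau / (4 * (D0 + 1)))) as [K HK].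
  { apply Rdiv_lt_0_compat; lra. }
  exists N0, K. split.
  - intros n Hn. eapply Rlt_le_trans; [apply HN0, Hn|apply Rmin_r].
  - intros k Hk. eapply Rle_trans; [apply Hit|].
    specialize (HK k Hk). rewrite Rabs_right in HK by (apply Rle_ge, pow_le; unfold th; lra).
    assert (th ^ k * D0 <= tau / 4).
    { apply Rle_trans with (tau / (4 * (D0 + 1)) * (D0 + 1)); [|right; field; lra].
      assert (0 <= th ^ k) by (apply pow_le; unfold th; lra). nra. }
    fold th D0. replace (INR (S s1) * eta / lam' ^ S s1) with (tau / 4) by (unfold eta; field; lra). lra.
Qed.

Theorem averaged_recurrence_cvg : is_lim_seq c L -> is_lim_seq z (L / B).
Proof.
  intros Hc. pose proof weights_sum_pos as HB.
  apply is_lim_seq_spec. intros tau.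
  destruct (oscillation_vanishes Hc tau (cond_pos tau)) as [N0 [K [Heps Hosc]]].
  exists (N0 + K * S s1)%nat. intros n Hn.
  set (k := ((n - N0) / S s1)%nat). set (i := ((n - N0) mod S s1)%nat).
  assert (Hdm : (n - N0 = S s1 * k + i)%nat) by (apply Nat.div_mod; lia).
  assert (Hi : (i < S s1)%nat) by (apply Nat.mod_upper_bound; lia).
  assert (HkK : (K <= k)%nat) by (apply Nat.div_le_lower_bound; lia).
  set (N := (N0 + k * S s1)%nat).
  replace n with (N + i)%nat by (unfold N; lia).
  assert (HD := Hosc k HkK). fold N in HD.
  assert (HeN : Rabs (eps N) / B < tau / 4).
  { apply (Rmult_lt_reg_r B); auto. unfold Rdiv. rewrite Rmult_assoc, Rinv_l, Rmult_1_r by lra.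
    specialize (Heps N ltac:(unfold N; lia)). lra. }
  pose proof (deviation_window_bound N i ltac:(lia)). pose proof (cond_pos tau).
  change (Rabs (w (N + i)%nat) < tau). lra.
Qed.

End Averaged_recurrence.

(** * The recurrence satisfied by the logarithms of the errors *)

(* Dividing [X ^ (S s1) - 2 X ^ s1 - (X ^ (s1 - 1) + ... + 1)] by [X - p], for the
   root [p] of its multiple [rate_poly (S s1)], leaves these coefficients. *)
Definition rate_weight (s1 : nat) (p : R) (i : nat) :=
  if Nat.ltb i s1 then inv_pow_sum (S i) p else 1.

Lemma rsum_rate_weight s1 p (Y : nat -> R) n : 0 < p -> inv_pow_sum s1 p = p - 2 ->
  rsum (S s1) (fun i => rate_weight s1 p i * (Y (n + S i)%nat - p * Y (n + i)%nat))
  = Y (n + S s1)%nat - 2 * Y (n + s1)%nat - rsum s1 (fun k => Y (n + k)%nat).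
Proof.
  intros Hp Hs.
  assert (Hlow : forall m, (m <= s1)%nat ->
    rsum m (fun i => rate_weight s1 p i * (Y (n + S i)%nat - p * Y (n + i)%nat))
    = inv_pow_sum m p * Y (n + m)%nat - rsum m (fun i => Y (n + i)%nat)).
  { induction m as [|m IH]; intros Hm; [simpl; ring|].
    simpl rsum. rewrite IH by lia. unfold rate_weight.
    replace (Nat.ltb m s1) with true by (symmetry; apply Nat.ltb_lt; lia).
    pose proof (inv_pow_sum_S_mul m p Hp). nra. }
  simpl rsum. rewrite Hlow, Hs by lia. unfold rate_weight. rewrite Nat.ltb_irrefl. ring.
Qed.

Lemma rate_weight_diff_ge s1 i : (i < S s1)%nat ->
  let p := rate (S s1) in Rmin (/ p ^ S s1) (3 - p) <= weight_diff (rate_weight s1 p) i.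
Proof.
  intros Hi p. pose proof (rate_ge_2 s1). pose proof (inv_pow_sum_rate s1) as Hs. fold p in H, Hs.
  assert (Hpow : forall m, (m <= S s1)%nat -> / p ^ S s1 <= / p ^ m).
  { intros m Hm. apply Rinv_le_contravar; [apply pow_lt; lra|apply Rle_pow; lra || lia]. }
  unfold weight_diff, rate_weight.
  destruct (Nat.ltb_spec i s1) as [His|His].
  - eapply Rle_trans; [apply Rmin_l|]. destruct i as [|i].
    + simpl. rewrite Rplus_0_l, Rminus_0_r. apply (Hpow 1%nat). lia.
    + replace (Nat.ltb i s1) with true by (symmetry; apply Nat.ltb_lt; lia).
      change (inv_pow_sum (S (S i)) p) with (inv_pow_sum (S i) p + / p ^ S (S i)).
      replace (inv_pow_sum (S i) p + / p ^ S (S i) - inv_pow_sum (S i) p) with (/ p ^ S (S i)) by ring.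
      apply Hpow. lia.
  - replace i with s1 by lia. eapply Rle_trans; [apply Rmin_r|]. destruct s1 as [|s1'].
    + simpl in Hs. lra.
    + replace (Nat.ltb s1' (S s1')) with true by (symmetry; apply Nat.ltb_lt; lia).
      rewrite Hs. lra.
Qed.

Theorem log_recurrence_cvg s1 (Y c : nat -> R) (L : R) :
  (forall n, Y (n + S s1)%nat - 2 * Y (n + s1)%nat - rsum s1 (fun k => Y (n + k)%nat) = c n) ->
  is_lim_seq c L -> exists Lz : R, is_lim_seq (fun n => Y (S n) - rate (S s1) * Y n) Lz.
Proof.
  intros HY Hc. set (p := rate (S s1)).
  pose proof (rate_ge_2 s1). pose proof (rate_lt_golden_sq s1). pose proof sqrt5_bounds.
  fold p in H, H0. unfold golden_sq in H0.
  exists (L / rsum (S s1) (rate_weight s1 p)).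
  apply (averaged_recurrence_cvg s1 (rate_weight s1 p) _ c (Rmin (/ p ^ S s1) (3 - p))).
  - unfold rate_weight. rewrite Nat.ltb_irrefl. reflexivity.
  - apply Rmin_pos; [apply Rinv_0_lt_compat, pow_lt|]; lra.
  - intros i Hi. apply rate_weight_diff_ge, Hi.
  - intros n. rewrite <- HY, <- (rsum_rate_weight s1 p); [|lra|apply inv_pow_sum_rate].
    apply rsum_ext. intros i Hi. replace (S (n + i)) with (n + S i)%nat by lia. reflexivity.
  - exact Hc.
Qed.

(** * Convergence of the method *)

Lemma Rabs_sq u : Rabs u * Rabs u = u * u.
Proof. rewrite <- Rabs_mult. apply Rabs_right. nra. Qed.

Lemma Rabs_div_sub_lt E A Q K eps : Q <> 0 -> Rabs (E - A * Q) <= K * Rabs Q -> K < eps ->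
  Rabs (E / Q - A) < eps.
Proof.
  intros HQ HE HK. assert (0 < Rabs Q) by (apply Rabs_pos_lt; auto).
  replace (E / Q - A) with ((E - A * Q) / Q) by (field; auto).
  unfold Rdiv. rewrite Rabs_mult, Rabs_inv.
  apply (Rmult_lt_reg_r (Rabs Q)); auto. rewrite Rmult_assoc, Rinv_l, Rmult_1_r by lra. nra.
Qed.

Lemma pow_1_plus_small m eps : 0 < eps -> exists tau, 0 < tau /\ (1 + tau) ^ m - 1 <= eps.
Proof.
  intros He.
  assert (Hc : continuous (fun t => (1 + t) ^ m) 0) by (apply ex_derive_continuous_R; auto_derive; auto).
  destruct (continuous_Rabs_lt _ _ Hc eps He) as [d [Hd Hball]].
  exists (d / 2). split; [lra|].
  assert (H := Hball (d / 2) ltac:(rewrite Rminus_0_r, Rabs_right; lra)).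
  rewrite Rplus_0_r, pow1 in H. apply Rabs_def2 in H. lra.
Qed.

Lemma perturbation_factor_small m a eps : 0 < eps -> 0 <= a ->
  exists tau, 0 < tau /\ eps / 4 * (1 + tau) ^ m + a * ((1 + tau) ^ m - 1) < eps.
Proof.
  intros He Ha. set (mu := Rmin 1 (eps / (4 * (a + 1)))).
  assert (Hmu : 0 < mu) by (apply Rmin_pos; [|apply Rdiv_lt_0_compat]; lra).
  destruct (pow_1_plus_small m mu Hmu) as [tau [Htau Hpow]]. exists tau. split; auto.
  assert (0 <= (1 + tau) ^ m - 1) by (pose proof (pow_R1_Rle (1 + tau) m ltac:(lra)); lra).
  assert (mu <= 1) by apply Rmin_l. assert (mu <= eps / (4 * (a + 1))) by apply Rmin_r.
  assert (a * ((1 + tau) ^ m - 1) <= eps / 4).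
  { apply Rle_trans with ((a + 1) * (eps / (4 * (a + 1)))); [apply Rmult_le_compat|right; field]; lra. }
  nra.
Qed.

Lemma continuity_pt_ln_Rabs a : a <> 0 -> continuity_pt (fun t => ln (Rabs t)) a.
Proof.
  intros Ha. apply (continuity_pt_comp Rabs ln a); [apply Rcontinuity_abs|].
  apply derivable_continuous_pt. exists (/ Rabs a). apply derivable_pt_lim_ln, Rabs_pos_lt, Ha.
Qed.

Section Convergence.
Variables (s1 : nat) (f g : R -> R) (alpha rI r0 rho1 : R).
Hypothesis Hf : smooth f.
Hypothesis Hfa : f alpha = 0.
Hypothesis Hd : Derive f alpha <> 0.
Hypothesis HrI : 0 < rI.
Hypothesis Hdb : forall x, Rabs (x - alpha) < rI ->
  Rabs (Derive f x - Derive f alpha) < Rabs (Derive f alpha) / 2.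
Hypothesis HCg : forall n, Cn_on n g (fun y => Rabs y < r0).
Hypothesis HDg : forall y, Rabs y < r0 -> Derive g y = / Derive f (g y).
Hypothesis Hgf : forall x, Rabs (x - alpha) < rI -> Rabs (f x) < r0 -> g (f x) = x.
Hypothesis Hg0 : g 0 = alpha.
Hypothesis Hrho1 : 0 < rho1.
Hypothesis Hrho1b : rho1 < r0.

Let A := interp_lead (S s1) g.
Hypothesis HA : A <> 0.
(* The first bound of [AB_step_error] for [eps = 1], with [rho1] its radius. *)
Hypothesis Hcrude : forall (y : nat -> R) c,
  (forall k, (k < S s1)%nat -> Rabs (y k) < rho1) ->
  (forall i j, (i < S s1)%nat -> (j < S s1)%nat -> i <> j -> y i <> y j) ->
  (forall k, (k < S s1)%nat -> Derive (poly_eval c (S s1)) (y k) = Derive g (y k)) ->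
  Rabs ((g 0 - poly_eval c (S s1) 0) - (g (y s1) - poly_eval c (S s1) (y s1)))
    <= (Rabs A + 1) * (2 * rho1) ^ s1 * (y s1 * y s1) / 2.

Definition slope_bound := 3 * Rabs (Derive f alpha) / 2.
Definition step_const := (Rabs A + 1) * (2 * rho1) ^ s1 / 2 * (slope_bound * slope_bound).

(* Small enough for the nodes [f (x l)] to stay within [rho1] of [0] and for
   every step to at least halve the error. *)
Definition delta := Rmin rI (Rmin (rho1 / slope_bound) (1 / (2 * step_const + 1))).

Lemma slope_bound_pos : 0 < slope_bound.
Proof. unfold slope_bound. assert (0 < Rabs (Derive f alpha)) by (apply Rabs_pos_lt; auto). lra. Qed.

Lemma step_const_nonneg : 0 <= step_const.
Proof.
  pose proof slope_bound_pos. pose proof (Rabs_pos A). unfold step_const.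
  assert (0 <= (2 * rho1) ^ s1) by (apply pow_le; lra).
  apply Rmult_le_pos; [|nra]. apply Rdiv_le_0_compat; [|lra]. apply Rmult_le_pos; lra.
Qed.

Lemma delta_pos : 0 < delta.
Proof.
  pose proof slope_bound_pos. pose proof step_const_nonneg.
  apply Rmin_pos; auto. apply Rmin_pos; apply Rdiv_lt_0_compat; lra.
Qed.

Lemma slope_bound_delta : slope_bound * delta <= rho1.
Proof.
  pose proof slope_bound_pos.
  apply Rle_trans with (slope_bound * (rho1 / slope_bound)); [|right; field; lra].
  apply Rmult_le_compat_l; [lra|]. eapply Rle_trans; [apply Rmin_r|apply Rmin_l].
Qed.

Lemma step_const_delta : step_const * delta < 1 / 2.
Proof.
  pose proof step_const_nonneg.
  assert (delta <= 1 / (2 * step_const + 1)) by (eapply Rle_trans; apply Rmin_r).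
  apply Rle_lt_trans with (step_const * (1 / (2 * step_const + 1))); [apply Rmult_le_compat_l; auto|].
  apply (Rmult_lt_reg_r (2 * step_const + 1)); [lra|]. field_simplify; lra.
Qed.

Variable x : nat -> R.
Hypothesis Hab : AB_sequence f (S s1) x.
Hypothesis Hinit : forall k, (k < S s1)%nat -> Rabs (x k - alpha) < delta.
Hypothesis Hne : forall l, x l <> alpha.
Hypothesis Hdist : forall n i j, (i < j)%nat -> (j < S s1)%nat -> f (x (n + i)%nat) <> f (x (n + j)%nat).

Definition err l := x l - alpha.

Lemma err_neq0 l : err l <> 0.
Proof. unfold err. intro H. apply (Hne l). lra. Qed.

Lemma node_facts l : Rabs (err l) < delta ->
  Rabs (err l) < rI /\ Rabs (f (x l)) < rho1 /\ Rabs (f (x l)) <= slope_bound * Rabs (err l) /\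
  Rabs (Derive f alpha) / 2 * Rabs (err l) <= Rabs (f (x l)) /\ g (f (x l)) = x l.
Proof.
  intros H. pose proof slope_bound_pos.
  assert (Hl1 : Rabs (err l) < rI) by (eapply Rlt_le_trans; [apply H|apply Rmin_l]).
  destruct (f_near_root f alpha rI Hf Hfa Hdb (x l) Hl1) as [Hlo Hhi]. fold (err l) slope_bound in Hlo, Hhi.
  assert (Rabs (f (x l)) < rho1).
  { eapply Rle_lt_trans; [apply Hhi|]. eapply Rlt_le_trans; [|apply slope_bound_delta].
    apply Rmult_lt_compat_l; auto. }
  repeat split; auto. apply Hgf; auto. lra.
Qed.

Lemma AB_error_identity n : (forall k, (k < S s1)%nat -> Rabs (err (n + k)%nat) < delta) ->
  exists c, (forall k, (k < S s1)%nat ->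
      Derive (poly_eval c (S s1)) (f (x (n + k)%nat)) = Derive g (f (x (n + k)%nat))) /\
    (g 0 - poly_eval c (S s1) 0) - (g (f (x (n + s1)%nat)) - poly_eval c (S s1) (f (x (n + s1)%nat)))
    = - err (n + S s1)%nat.
Proof.
  intros Hw. destruct (Hab n) as [c [H1 [H2 H3]]]. exists c.
  replace (n + S s1 - 1)%nat with (n + s1)%nat in H1 by lia. split.
  - intros k Hk. rewrite H2 by auto. destruct (node_facts (n + k) (Hw k Hk)) as [_ [Hr [_ [_ Hgx]]]].
    rewrite HDg, Hgx by lra. reflexivity.
  - destruct (node_facts (n + s1) (Hw s1 ltac:(lia))) as [_ [_ [_ [_ Hgx]]]].
    rewrite Hgx, H1, <- H3, Hg0. unfold err. ring.
Qed.

Lemma nodes_distinct n i j : (i < S s1)%nat -> (j < S s1)%nat -> i <> j -> f (x (n + i)%nat) <> f (x (n + j)%nat).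
Proof.
  intros Hi Hj Hij. destruct (Nat.lt_total i j) as [H|[H|H]]; [apply Hdist; auto|lia|].
  apply not_eq_sym, Hdist; auto.
Qed.

Lemma error_quadratic n : (forall k, (k < S s1)%nat -> Rabs (err (n + k)%nat) < delta) ->
  Rabs (err (n + S s1)%nat) <= step_const * (Rabs (err (n + s1)%nat) * Rabs (err (n + s1)%nat)).
Proof.
  intros Hw. destruct (AB_error_identity n Hw) as [c [Hint HE]].
  assert (Hy : forall k, (k < S s1)%nat -> Rabs (f (x (n + k)%nat)) < rho1)
    by (intros k Hk; apply (node_facts _ (Hw k Hk))).
  assert (Hs := Hcrude (fun k => f (x (n + k)%nat)) c Hy (nodes_distinct n) Hint).
  cbv beta in Hs. rewrite HE, Rabs_Ropp, <- Rabs_sq in Hs.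
  destruct (node_facts (n + s1) (Hw s1 ltac:(lia))) as [_ [_ [Hb _]]].
  eapply Rle_trans; [apply Hs|]. unfold step_const.
  set (K := (Rabs A + 1) * (2 * rho1) ^ s1 / 2).
  assert (HK : 0 <= K).
  { unfold K. pose proof (Rabs_pos A). assert (0 <= (2 * rho1) ^ s1) by (apply pow_le; lra).
    apply Rdiv_le_0_compat; [apply Rmult_le_pos|]; lra. }
  replace ((Rabs A + 1) * (2 * rho1) ^ s1 * (Rabs (f (x (n + s1)%nat)) * Rabs (f (x (n + s1)%nat))) / 2)
    with (K * (Rabs (f (x (n + s1)%nat)) * Rabs (f (x (n + s1)%nat)))) by (unfold K; field).
  replace (K * (slope_bound * slope_bound) * (Rabs (err (n + s1)%nat) * Rabs (err (n + s1)%nat)))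
    with (K * ((slope_bound * Rabs (err (n + s1)%nat)) * (slope_bound * Rabs (err (n + s1)%nat)))) by ring.
  apply Rmult_le_compat_l; auto. apply Rmult_le_compat; auto using Rabs_pos.
Qed.

Lemma halving n : (forall k, (k < S s1)%nat -> Rabs (err (n + k)%nat) < delta) ->
  Rabs (err (n + S s1)%nat) <= Rabs (err (n + s1)%nat) / 2.
Proof.
  intros Hw. pose proof (error_quadratic n Hw). pose proof (Hw s1 ltac:(lia)).
  pose proof step_const_delta. pose proof step_const_nonneg. pose proof (Rabs_pos (err (n + s1)%nat)).
  assert (step_const * Rabs (err (n + s1)%nat) <= 1 / 2).
  { apply Rle_trans with (step_const * delta); [apply Rmult_le_compat_l|]; lra. }
  nra.
Qed.

Lemma err_lt_delta l : Rabs (err l) < delta.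
Proof.
  induction l as [l IH] using Wf_nat.lt_wf_ind.
  destruct (Compare_dec.lt_dec l (S s1)) as [Hl|Hl]; [apply Hinit; auto|].
  set (n := (l - S s1)%nat).
  assert (Hw : forall k, (k < S s1)%nat -> Rabs (err (n + k)%nat) < delta) by (intros k Hk; apply IH; unfold n; lia).
  replace l with (n + S s1)%nat by (unfold n; lia).
  pose proof (halving n Hw). pose proof (Hw s1 ltac:(lia)). pose proof (Rabs_pos (err (n + s1)%nat)). lra.
Qed.

Lemma err_step n :
  Rabs (err (n + S s1)%nat) <= step_const * (Rabs (err (n + s1)%nat) * Rabs (err (n + s1)%nat)) /\
  Rabs (err (n + S s1)%nat) <= Rabs (err (n + s1)%nat) / 2.
Proof. split; [apply error_quadratic|apply halving]; intros; apply err_lt_delta. Qed.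

Lemma err_nonincreasing i j : (s1 <= i)%nat -> (i <= j)%nat -> Rabs (err j) <= Rabs (err i).
Proof.
  intros Hi Hij. induction Hij; [lra|].
  eapply Rle_trans; [|apply IHHij].
  destruct (err_step (m - s1)) as [_ H]. replace (m - s1 + S s1)%nat with (S m) in H by lia.
  replace (m - s1 + s1)%nat with m in H by lia. pose proof (Rabs_pos (err m)). lra.
Qed.

Lemma err_geometric m : Rabs (err (s1 + m)%nat) <= (/ 2) ^ m * delta.
Proof.
  induction m as [|m IH]; [rewrite Nat.add_0_r; simpl; pose proof (err_lt_delta s1); lra|].
  destruct (err_step (s1 + m - s1)) as [_ H].
  replace (s1 + m - s1 + S s1)%nat with (s1 + S m)%nat in H by lia.
  replace (s1 + m - s1 + s1)%nat with (s1 + m)%nat in H by lia. simpl pow. lra.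
Qed.

Lemma is_lim_seq_err : is_lim_seq err 0.
Proof.
  apply (is_lim_seq_incr_n err s1).
  assert (Hgeom : forall c, is_lim_seq (fun m => (/ 2) ^ m * c) 0).
  { intros c. replace (Finite 0) with (Rbar_mult 0 c) by (simpl; f_equal; ring).
    apply (is_lim_seq_scal_r (fun m => (/ 2) ^ m) c 0), is_lim_seq_geom. rewrite Rabs_right; lra. }
  apply is_lim_seq_le_le with (u := fun m => (/ 2) ^ m * (- delta)) (w := fun m => (/ 2) ^ m * delta);
    [|apply Hgeom|apply Hgeom].
  intros m. rewrite Nat.add_comm, Ropp_mult_distr_r_reverse. apply Rabs_le_between, err_geometric.
Qed.

Lemma is_lim_seq_x : is_lim_seq x alpha.
Proof.
  apply is_lim_seq_ext with (fun l => err l + alpha); [intros; unfold err; ring|].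
  replace (Finite alpha) with (Rbar_plus 0 alpha) by (simpl; f_equal; ring).
  apply (is_lim_seq_plus' err (fun _ => alpha)); [apply is_lim_seq_err|apply is_lim_seq_const].
Qed.

Lemma err_eventually_lt eta : 0 < eta -> exists N, forall n, (N <= n)%nat -> Rabs (err n) < eta.
Proof.
  intros He. pose proof is_lim_seq_err as H. apply is_lim_seq_spec in H.
  destruct (H (mkposreal eta He)) as [N HN]. exists N. intros n Hn.
  specialize (HN n Hn). simpl in HN. rewrite Rminus_0_r in HN. auto.
Qed.

Lemma f_x_neq0 l : f (x l) <> 0.
Proof.
  intros Hz. destruct (node_facts l (err_lt_delta l)) as [_ [_ [_ [Hlo _]]]].
  rewrite Hz, Rabs_R0 in Hlo.
  assert (0 < Rabs (err l)) by (apply Rabs_pos_lt, err_neq0).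
  assert (0 < Rabs (Derive f alpha)) by (apply Rabs_pos_lt; auto). nra.
Qed.

Definition slope l := f (x l) / err l.

Lemma is_lim_seq_slope : is_lim_seq slope (Derive f alpha).
Proof.
  assert (Hder : derivable_pt_lim f alpha (Derive f alpha))
    by apply is_derive_Reals, Derive_correct, (Hf 1%nat).
  apply is_lim_seq_spec. intros eps.
  destruct (Hder eps (cond_pos eps)) as [dl Hdl].
  destruct (err_eventually_lt dl (cond_pos dl)) as [N HN]. exists N. intros n Hn.
  specialize (Hdl (err n) (err_neq0 n) (HN n Hn)).
  replace (alpha + err n) with (x n) in Hdl by (unfold err; ring). rewrite Hfa, Rminus_0_r in Hdl. exact Hdl.
Qed.

Lemma last_node_relatively_small tau : 0 < tau -> exists N, forall n, (N <= n)%nat ->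
  forall k, (k < s1)%nat -> Rabs (f (x (n + s1)%nat)) <= tau * Rabs (f (x (n + k)%nat)).
Proof.
  intros Htau. set (ell := Rabs (Derive f alpha) / 2).
  assert (Hell : 0 < ell) by (unfold ell; assert (0 < Rabs (Derive f alpha)) by (apply Rabs_pos_lt; auto); lra).
  pose proof slope_bound_pos as HL. pose proof step_const_nonneg as HC.
  set (K := slope_bound * step_const + 1).
  assert (HK : 1 <= K) by (unfold K; nra).
  destruct (err_eventually_lt (tau * ell / K)) as [N HN]; [apply Rdiv_lt_0_compat; nra|].
  exists (N + S s1)%nat. intros n Hn k Hk.
  destruct (node_facts (n + s1) (err_lt_delta _)) as [_ [_ [Hb1 _]]].
  destruct (node_facts (n + k) (err_lt_delta _)) as [_ [_ [_ [Hb2 _]]]]. fold ell in Hb2.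
  destruct (err_step (n - 1)) as [Hq _].
  replace (n - 1 + S s1)%nat with (n + s1)%nat in Hq by lia.
  set (e0 := Rabs (err (n - 1 + s1)%nat)) in Hq.
  assert (Hm : e0 <= Rabs (err (n + k)%nat)) by (apply err_nonincreasing; lia).
  assert (Hsm : e0 < tau * ell / K) by (apply HN; lia).
  assert (H0 : 0 <= e0) by apply Rabs_pos.
  assert (Hc : slope_bound * step_const * e0 <= tau * ell).
  { apply Rle_trans with (K * e0); [unfold K; nra|].
    apply Rle_trans with (K * (tau * ell / K)); [apply Rmult_le_compat_l; lra|right; field; lra]. }
  pose proof (Rabs_pos (err (n + k)%nat)).
  apply Rle_trans with (slope_bound * (step_const * (e0 * Rabs (err (n + k)%nat)))); [|nra].
  eapply Rle_trans; [apply Hb1|]. apply Rmult_le_compat_l; [lra|].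
  eapply Rle_trans; [apply Hq|]. apply Rmult_le_compat_l; [lra|]. apply Rmult_le_compat_l; lra.
Qed.

Definition node_prod n := rprod s1 (fun k => - f (x (n + k)%nat)).
Definition last_node n := f (x (n + s1)%nat).
Definition error_ratio n := - err (n + S s1)%nat / (node_prod n * (last_node n * last_node n) / 2).

Lemma node_prod_neq0 n : node_prod n <> 0.
Proof. apply rprod_neq0. intros k Hk Hc. apply (f_x_neq0 (n + k)). lra. Qed.

Lemma nodes_eventually_small rho : 0 < rho ->
  exists N, forall n, (N <= n)%nat -> forall k, Rabs (f (x (n + k)%nat)) < rho.
Proof.
  intros Hrho. pose proof slope_bound_pos.
  destruct (err_eventually_lt (rho / slope_bound)) as [N HN]; [apply Rdiv_lt_0_compat; lra|].
  exists N. intros n Hn k. destruct (node_facts (n + k) (err_lt_delta _)) as [_ [_ [Hb _]]].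
  eapply Rle_lt_trans; [apply Hb|].
  apply Rlt_le_trans with (slope_bound * (rho / slope_bound)); [|right; field; lra].
  apply Rmult_lt_compat_l, HN; [lra|lia].
Qed.

Lemma error_scale_neq0 n : node_prod n * (last_node n * last_node n) / 2 <> 0.
Proof.
  pose proof (node_prod_neq0 n). pose proof (f_x_neq0 (n + s1)). unfold last_node.
  apply Rmult_integral_contrapositive_currified; [|lra].
  repeat apply Rmult_integral_contrapositive_currified; auto.
Qed.

Lemma Rabs_error_scale n :
  Rabs (node_prod n * (last_node n * last_node n) / 2) = Rabs (node_prod n) * (last_node n * last_node n) / 2.
Proof. unfold Rdiv. rewrite !Rabs_mult, (Rabs_right (/ 2)), Rabs_sq by lra. ring. Qed.

Lemma is_lim_seq_error_ratio : is_lim_seq error_ratio A.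
Proof.
  apply is_lim_seq_spec. intros eps0. pose proof (cond_pos eps0).
  destruct (perturbation_factor_small s1 (Rabs A) eps0) as [tau [Htau Hsmall]]; auto using Rabs_pos.
  destruct (AB_step_error s1 g r0 ltac:(lra) (HCg (S (S s1))) (eps0 / 4)) as [rho [Hrho [_ Hst]]]; [lra|].
  destruct (nodes_eventually_small rho Hrho) as [N1 HN1].
  destruct (last_node_relatively_small tau Htau) as [N2 HN2].
  exists (N1 + N2)%nat. intros n Hn.
  destruct (AB_error_identity n (fun k _ => err_lt_delta (n + k))) as [c [Hint HE]].
  destruct (Hst (fun k => f (x (n + k)%nat)) c (fun k _ => HN1 n ltac:(lia) k) (nodes_distinct n) Hint)
    as [_ Hmain].
  specialize (Hmain tau ltac:(lra) (HN2 n ltac:(lia))).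
  cbv zeta beta in Hmain. rewrite HE in Hmain. fold A (node_prod n) (last_node n) in Hmain.
  apply (Rabs_div_sub_lt _ _ _ (eps0 / 4 * (1 + tau) ^ s1 + Rabs A * ((1 + tau) ^ s1 - 1)));
    [apply error_scale_neq0| |exact Hsmall].
  rewrite Rabs_error_scale.
  replace (A * (node_prod n * (last_node n * last_node n) / 2))
    with (A * node_prod n * (last_node n * last_node n) / 2) by (unfold Rdiv; ring).
  eapply Rle_trans; [apply Hmain|right; field].
Qed.

Definition log_err l := ln (Rabs (err l)).

Definition log_remainder n := ln (Rabs (error_ratio n)) - ln 2
  + rsum s1 (fun k => ln (Rabs (slope (n + k)%nat))) + 2 * ln (Rabs (slope (n + s1)%nat)).

Lemma slope_neq0 l : slope l <> 0.
Proof. apply Rmult_integral_contrapositive_currified; [apply f_x_neq0|apply Rinv_neq_0_compat, err_neq0]. Qed.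

Lemma ln_Rabs_f_x l : ln (Rabs (f (x l))) = ln (Rabs (slope l)) + log_err l.
Proof.
  unfold log_err. replace (f (x l)) with (slope l * err l) at 1 by (unfold slope; field; apply err_neq0).
  rewrite Rabs_mult, ln_mult; auto; apply Rabs_pos_lt; auto using slope_neq0, err_neq0.
Qed.

Lemma log_err_recurrence n :
  log_err (n + S s1)%nat - 2 * log_err (n + s1)%nat - rsum s1 (fun k => log_err (n + k)%nat)
  = log_remainder n.
Proof.
  pose proof (node_prod_neq0 n) as HP. pose proof (f_x_neq0 (n + s1)) as Ha. fold (last_node n) in Ha.
  pose proof (error_scale_neq0 n) as HQ.
  assert (HR : error_ratio n <> 0).
  { apply Rmult_integral_contrapositive_currified; [apply Ropp_neq_0_compat, err_neq0|apply Rinv_neq_0_compat, HQ]. }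
  assert (He : err (n + S s1)%nat = error_ratio n * (- node_prod n) * last_node n * last_node n * / 2)
    by (unfold error_ratio; field; auto).
  assert (HY : log_err (n + S s1)%nat = ln (Rabs (error_ratio n)) + ln (Rabs (node_prod n))
                                        + 2 * ln (Rabs (last_node n)) - ln 2).
  { unfold log_err. rewrite He, !Rabs_mult, Rabs_Ropp, Rabs_inv, (Rabs_right 2) by lra.
    rewrite !ln_mult, ln_Rinv; try lra; try apply Rinv_0_lt_compat; try lra;
      repeat apply Rmult_lt_0_compat; apply Rabs_pos_lt; auto. }
  unfold log_remainder. rewrite HY. unfold node_prod, last_node.
  rewrite ln_Rabs_rprod by (intros k Hk Hc; apply (f_x_neq0 (n + k)); lra).
  rewrite (rsum_ext s1 _ (fun k => ln (Rabs (slope (n + k)%nat)) + log_err (n + k)%nat))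
    by (intros k Hk; rewrite Rabs_Ropp; apply ln_Rabs_f_x).
  rewrite rsum_plus, ln_Rabs_f_x. ring.
Qed.

Lemma is_lim_seq_log_remainder : is_lim_seq log_remainder
  (ln (Rabs A) - ln 2 + rsum s1 (fun _ => ln (Rabs (Derive f alpha))) + 2 * ln (Rabs (Derive f alpha))).
Proof.
  assert (Hq : forall k, is_lim_seq (fun n => ln (Rabs (slope (n + k)%nat))) (ln (Rabs (Derive f alpha)))).
  { intros k. apply (is_lim_seq_continuous (fun t => ln (Rabs t)) (fun n => slope (n + k)%nat)).
    - apply continuity_pt_ln_Rabs; auto.
    - apply (is_lim_seq_incr_n slope k), is_lim_seq_slope. }
  apply is_lim_seq_plus'; [apply is_lim_seq_plus'; [apply is_lim_seq_minus'|]|].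
  - apply (is_lim_seq_continuous (fun t => ln (Rabs t)) error_ratio).
    + apply continuity_pt_ln_Rabs; auto.
    + apply is_lim_seq_error_ratio.
  - apply is_lim_seq_const.
  - apply (is_lim_seq_rsum s1 (fun k n => ln (Rabs (slope (n + k)%nat)))). intros; apply Hq.
  - apply (is_lim_seq_scal_l (fun n => ln (Rabs (slope (n + s1)%nat))) 2 (ln (Rabs (Derive f alpha)))), Hq.
Qed.

Theorem AB_convergence_rate : has_convergence_rate x alpha (rate (S s1)).
Proof.
  destruct (log_recurrence_cvg s1 log_err log_remainder _ log_err_recurrence is_lim_seq_log_remainder)
    as [Lz HLz].
  split; [apply is_lim_seq_x|]. exists (exp Lz). split; [apply exp_pos|].
  apply is_lim_seq_ext with (fun l => exp (log_err (S l) - rate (S s1) * log_err l)).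
  - intros l. unfold log_err, Rpower. fold (err (S l)) (err l).
    rewrite Rmult_comm. unfold Rminus. rewrite exp_plus, exp_ln, exp_Ropp by apply Rabs_pos_lt, err_neq0.
    reflexivity.
  - apply (is_lim_seq_continuous exp _ Lz); [apply derivable_continuous_pt, derivable_pt_exp|exact HLz].
Qed.

End Convergence.

Lemma AB_local_convergence s (f : R -> R) alpha :
  (1 <= s)%nat -> smooth f -> f alpha = 0 -> Derive f alpha <> 0 ->
  inverse_nondegenerate f alpha s ->
  exists delta : R, 0 < delta /\
    forall x : nat -> R,
      AB_sequence f s x ->
      (forall k : nat, (k < s)%nat -> Rabs (x k - alpha) < delta) ->
      (forall l : nat, x l <> alpha) ->
      (forall n i j : nat, (i < j)%nat -> (j < s)%nat -> f (x (n + i)%nat) <> f (x (n + j)%nat)) ->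
      has_convergence_rate x alpha (rate s).
Proof.
  intros Hs Hf Hfa Hd [g [r [Hr [Hg0 [Hg Hnd]]]]]. destruct s as [|s1]; [lia|].
  destruct (local_inverse_setup f g alpha r Hf Hd Hr Hg0 Hg)
    as [rI [r0 [HrI [Hr0 [Hdb [HCg [HDg Hgf]]]]]]].
  assert (HA : interp_lead (S s1) g <> 0).
  { unfold interp_lead. rewrite (Derive_n_comp g (S s1) 1), Nat.add_1_r.
    apply Rmult_integral_contrapositive_currified; auto. apply Rinv_neq_0_compat, INR_fact_neq_0. }
  destruct (AB_step_error s1 g r0 Hr0 (HCg (S (S s1))) 1 Rlt_0_1) as [rho1 [Hrho1 [Hrho1b Hstep]]].
  exists (delta s1 f g alpha rI rho1). split; [apply delta_pos; auto|].
  intros x. apply (AB_convergence_rate s1 f g alpha rI r0 rho1); auto.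
  intros y c Hy Hinj Hint. apply (Hstep y c Hy Hinj Hint).
Qed.

Theorem corollary2 :
  exists p : nat -> R,
    (forall s : nat, (1 <= s)%nat ->
       rate_poly s (p s) = 0 /\ (forall q : R, rate_poly s q = 0 -> q <= p s)) /\
    (forall s : nat, (1 <= s)%nat -> p s < (3 + sqrt 5) / 2) /\
    (forall s : nat, (1 <= s)%nat -> p s < p (S s)) /\
    is_lim_seq p ((3 + sqrt 5) / 2) /\
    (forall (s : nat) (f : R -> R) (alpha : R),
       (1 <= s)%nat -> smooth f -> f alpha = 0 -> Derive f alpha <> 0 ->
       inverse_nondegenerate f alpha s ->
       exists delta : R, 0 < delta /\
         forall x : nat -> R,
           AB_sequence f s x ->
           (forall k : nat, (k < s)%nat -> Rabs (x k - alpha) < delta) ->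
           (forall l : nat, x l <> alpha) ->
           (forall n i j : nat, (i < j)%nat -> (j < s)%nat ->
              f (x (n + i)%nat) <> f (x (n + j)%nat)) ->
           has_convergence_rate x alpha (p s)).
Proof.
  exists rate. split; [|split; [|split; [|split]]].
  - intros s Hs. destruct s as [|s]; [lia|].
    split; [apply rate_spec|apply rate_largest_root].
  - intros s Hs. destruct s as [|s]; [lia|]. apply rate_lt_golden_sq.
  - intros s Hs. destruct s as [|s]; [lia|]. apply rate_increasing.
  - apply is_lim_seq_rate.
  - apply AB_local_convergence.
Qed.
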